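(* If $f:\subseteq\mathbf R^m\to\mathbf R^m$ is real recursive, then there is a real recursive function $g:\subseteq\mathbf R^{m+1}\to\mathbf R^m$ extending the function $g'$ defined by $\operatorname{dom} g'=\{(\vec v,k)\in\mathbf R^m\times(\mathbf N\setminus\{0\})\mid \vec v\in\operatorname{dom} f^k\}$ and $g'(\vec v,k)=f^k\vec v$, where $f^k=f\circ\dots\circ f$ ($k$ times); i.e. $(\vec v,k)\in\operatorname{dom} g$ and $g(\vec v,k)=f^k\vec v$ whenever $(\vec v,k)\in\operatorname{dom} g'$.
   Context: Functions may be partial: $f:\subseteq\mathbf R^m\to\mathbf R^n$ has domain $\operatorname{dom} f\subseteq\mathbf R^m$; $\mathbf R^0$ is a one-point space. Juxtaposition: $[g_0,\dots,g_{n-1}]\vec x=(g_0\vec x,\dots,g_{n-1}\vec x)$, defined exactly when $\vec x\in\bigcap_j\operatorname{dom} g_j$. Composition: $(f\circ g)\vec x=f(g\vec x)$, defined exactly when $\vec x\in\operatorname{dom} g$ and $g\vec x\in\operatorname{dom} f$. Differential recursion: for $f:\subseteq\mathbf R^m\to\mathbf R^n$, $g:\subseteq\mathbf R^{m+1+n}\to\mathbf R^n$ and $\vec v\in\mathbf R^m$, let $H_{\vec v}$ be the set of all $h:\subseteq\mathbf R\to\mathbf R^n$ such that (1) $\operatorname{dom} h$ is empty or a (possibly unbounded) interval containing $0$; (2) $\vec v\in\operatorname{dom} f$ if $\operatorname{dom} h\ne\emptyset$; (3) $(\vec v,\tau,h\tau)\in\operatorname{dom} g$ for every $\tau\in\operatorname{dom}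 h$; (4) $h t=f\vec v+\int_0^t g(\vec v,\tau,h\tau)\,d\tau$ for every $t\in\operatorname{dom} h$. A function $h\in H$ is unique in a set $H$ if for every $h'\in H$, $h'$ and $h$ agree on $\operatorname{dom} h\cap\operatorname{dom} h'$. Let $K_{\vec v}$ be the set of functions unique in $H_{\vec v}$ (these agree on common domains) and let $h_{\vec v}$ be their union. Define $\mathrm{PR}(f,g):\subseteq\mathbf R^{m+1}\to\mathbf R^n$ by $\operatorname{dom}\mathrm{PR}(f,g)=\{(\vec v,t)\mid t\in\operatorname{dom} h_{\vec v}\}$ and $\mathrm{PR}(f,g)(\vec v,t)=h_{\vec v}t$. The class of real primitive recursive functions is the smallest class containing the nullary functions with values $0$, $1$, $-1$ and closed under juxtaposition, composition and $\mathrm{PR}$. Minimization: for $f:\subseteq\mathbf R^{m+1}\to\mathbf R$ and $\vec v\in\mathbf R^m$, say $t^+$ is defined if there is $t\ge0$ with $(\vec v,t)\in\operatorname{dom} f$, $f(\vec v,t)=0$ and $(\vec v,\tau)\in\operatorname{dom} f$ for all $\tau\in[-t,t]$, in which case $t^+=\inf\{t\ge0\mid (\vec v,t)\in\operatorname{dom} f,\ f(\vec v,t)=0\}$; symmetrically $t^-$ is defined if there is $t\le0$ with $f(\vec v,t)=0$ and $(\vec v,\tau)\in\operatorname{dom} f$ for all $\tau\in[t,-t]$, in which case $t^-=\sup\{t\le0\mid (\vec v,t)\in\operatorname{dom} f,\ f(\vec v,t)=0\}$. Then $\mathrm{MN}f\,\vec v$ is defined iff at least one of $t^+,t^-$ is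 defined; if only one is defined it is the value; if both are, the value is $t^+$ when $t^+<-t^-$ and $t^-$ otherwise. The class of real recursive functions is the smallest class containing all real primitive recursive functions and closed under juxtaposition, composition, $\mathrm{PR}$ and $\mathrm{MN}$. *)

From Stdlib Require Import Reals List.
Import ListNotations.
Open Scope R_scope.

(* A partial function R^m -> R^n is represented by its graph:
   [F v w] means "v is in dom F and F v = w".
   Vectors are lists of reals; arities are tracked by the class predicates,
   and every constructor below only relates inputs of the right length. *)
Definition PF := list R -> list R -> Prop.

Definition cst (c : R) : PF := fun v w => v = [] /\ w = [c].

Definition juxt (m n : nat) (gs : nat -> PF) : PF :=
  fun v w => length v = m /\ length w = n /\
    forall j, (j < n)%nat -> gs j v [nth j w 0].

Definition comp (f g : PF) : PF := fun v w => exists u, g v u /\ f u w.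

Definition dom1 (h : R -> option (list R)) (t : R) : Prop := h t <> None.

Definition is_interval (I : R -> Prop) : Prop :=
  forall x y z, I x -> I y -> x <= z <= y -> I z.

(* The set H_v of the definition of PR(f,g), f of arity m, g of arity m+1+n,
   values in R^n. *)
Definition PR_H (m n : nat) (f g : PF) (v : list R)
    (h : R -> option (list R)) : Prop :=
  ((forall t, h t = None) \/ (is_interval (dom1 h) /\ dom1 h 0)) /\
  ((exists t, dom1 h t) -> exists fv, f v fv) /\
  (* (3),(4): gam tau is the value g(v,tau,h tau) for tau in dom h *)
  (exists gam : R -> list R,
     (forall tau y, h tau = Some y -> g (v ++ tau :: y) (gam tau)) /\
     forall t y, h t = Some y ->
       length y = n /\
       exists fv, f v fv /\
         forall i, (i < n)%nat ->
           exists pr : Riemann_integrable (fun tau => nth i (gam tau) 0) 0 t,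
             nth i y 0 = nth i fv 0 + RiemannInt pr).

Definition unique_in (S : (R -> option (list R)) -> Prop)
    (h : R -> option (list R)) : Prop :=
  S h /\ forall h', S h' -> forall t y y', h t = Some y -> h' t = Some y' -> y = y'.

(* PR(f,g) : R^{m+1} -> R^n ; input u = (v, t). *)
Definition PRop (m n : nat) (f g : PF) : PF :=
  fun u w => length u = S m /\
    exists h, unique_in (PR_H m n f g (firstn m u)) h /\ h (nth m u 0) = Some w.

Definition tplus_defined (f : PF) (v : list R) : Prop :=
  exists t, 0 <= t /\ f (v ++ [t]) [0] /\
    forall tau, -t <= tau <= t -> exists w, f (v ++ [tau]) w.
Definition tminus_defined (f : PF) (v : list R) : Prop :=
  exists t, t <= 0 /\ f (v ++ [t]) [0] /\
    forall tau, t <= tau <= -t -> exists w, f (v ++ [tau]) w.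

Definition is_lower_bound (E : R -> Prop) (m : R) := forall x, E x -> m <= x.
Definition is_glb (E : R -> Prop) (m : R) :=
  is_lower_bound E m /\ (forall b, is_lower_bound E b -> b <= m).

Definition tplus (f : PF) (v : list R) (s : R) : Prop :=
  tplus_defined f v /\ is_glb (fun t => 0 <= t /\ f (v ++ [t]) [0]) s.
Definition tminus (f : PF) (v : list R) (s : R) : Prop :=
  tminus_defined f v /\ is_lub (fun t => t <= 0 /\ f (v ++ [t]) [0]) s.

Definition MNop (m : nat) (f : PF) : PF :=
  fun v w => length v = m /\ exists s, w = [s] /\
    ( (tplus f v s /\ ~ tminus_defined f v)
    \/ (tminus f v s /\ ~ tplus_defined f v)
    \/ (exists a b, tplus f v a /\ tminus f v b /\
          ((a < - b /\ s = a) \/ (~ (a < - b) /\ s = b))) ).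

(* Real primitive recursive functions: [RPrimRec m n f] means f : R^m -> R^n. *)
Inductive RPrimRec : nat -> nat -> PF -> Prop :=
| rpr_zero : RPrimRec 0 1 (cst 0)
| rpr_one : RPrimRec 0 1 (cst 1)
| rpr_mone : RPrimRec 0 1 (cst (-1))
| rpr_juxt : forall m n (gs : nat -> PF),
    (forall j, (j < n)%nat -> RPrimRec m 1 (gs j)) -> RPrimRec m n (juxt m n gs)
| rpr_comp : forall m k n f g,
    RPrimRec k n f -> RPrimRec m k g -> RPrimRec m n (comp f g)
| rpr_pr : forall m n f g,
    RPrimRec m n f -> RPrimRec (m + 1 + n) n g -> RPrimRec (S m) n (PRop m n f g).

Inductive RRec : nat -> nat -> PF -> Prop :=
| rr_prim : forall m n f, RPrimRec m n f -> RRec m n f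
| rr_juxt : forall m n (gs : nat -> PF),
    (forall j, (j < n)%nat -> RRec m 1 (gs j)) -> RRec m n (juxt m n gs)
| rr_comp : forall m k n f g,
    RRec k n f -> RRec m k g -> RRec m n (comp f g)
| rr_pr : forall m n f g,
    RRec m n f -> RRec (m + 1 + n) n g -> RRec (S m) n (PRop m n f g)
| rr_mn : forall m f, RRec (S m) 1 f -> RRec m 1 (MNop m f).

Fixpoint iter_graph (f : PF) (k : nat) : PF :=
  match k with
  | O => fun v w => w = v
  | S k' => fun v w => exists u, iter_graph f k' v u /\ f u w
  end.

From Pilot Require Import Defs.
From Stdlib Require Import Reals List Lra Lia ClassicalEpsilon ZArith.
Import ListNotations.
Open Scope R_scope.

(* For v with orbit a_0 = v, a_{j+1} = f a_j, we solve by differential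
   recursion a system for Y = (Y1, Y2) in R^(2m), driven by the time t:
   - on [2 pi j, 2 pi j + pi] (sin t >= 0), Y1 stays at a_j while Y2 moves
     from a_j to f(Y1) = a_{j+1} with rate sin t * (f Y1 - Y1) / 2;
   - on [2 pi j + pi, 2 pi (j+1)] (sin t < 0), Y2 stays at a_{j+1} while Y1
     relaxes to Y2 with rate sin t * (Y1 - Y2) / (1 - cos t).
   Hence Y2 = f^k v at time pi (2k - 1). *)

Lemma glb_unique E a b : is_glb E a -> is_glb E b -> a = b.
Proof. intros [Ha Ha'] [Hb Hb']. apply Rle_antisym; [apply Hb'|apply Ha']; auto. Qed.

Lemma lub_unique E a b : is_lub E a -> is_lub E b -> a = b.
Proof. intros [Ha Ha'] [Hb Hb']. apply Rle_antisym; [apply Ha'|apply Hb']; auto. Qed.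

Definition is_fun (m n : nat) (f : PF) : Prop :=
  (forall u w, f u w -> length u = m /\ length w = n) /\
  (forall u w w', f u w -> f u w' -> w = w').

Lemma is_fun_cst c : is_fun 0 1 (cst c).
Proof. split; unfold cst; intros; [destruct H; subst; auto|].
  destruct H as [_ ->]; destruct H0 as [_ ->]; auto. Qed.

Lemma is_fun_juxt m n gs : (forall j, (j < n)%nat -> is_fun m 1 (gs j)) -> is_fun m n (juxt m n gs).
Proof. intros H; split; unfold juxt.
  - intros u w (?&?&?); auto.
  - intros u w w' (Hu&Hw&H1) (_&Hw'&H2). apply nth_ext with 0 0; [congruence|].
    intros j Hj. rewrite Hw in Hj. apply H in Hj as Hg.
    destruct Hg as [_ Hg]. specialize (Hg _ _ _ (H1 j Hj) (H2 j Hj)). congruence.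
Qed.

Lemma is_fun_comp m k n f g : is_fun k n f -> is_fun m k g -> is_fun m n (Defs.comp f g).
Proof. intros [Hf1 Hf2] [Hg1 Hg2]; split; unfold Defs.comp.
  - intros u w (x&H1&H2). split; [apply (Hg1 _ _ H1)| apply (Hf1 _ _ H2)].
  - intros u w w' (x&H1&H2) (x'&H1'&H2'). rewrite (Hg2 _ _ _ H1 H1') in H2. eauto.
Qed.

Lemma is_fun_PR m n f g : is_fun (S m) n (PRop m n f g).
Proof. split; unfold PRop.
  - intros u w (Hu & h & Hh & Ht). split; auto.
    destruct Hh as [[_ [_ [gam [_ Hg]]]] _]. apply (Hg _ _ Ht).
  - intros u w w' (Hu & h & Hh & Ht) (_ & h' & Hh' & Ht').
    destruct Hh as [_ U]. apply (U h' (proj1 Hh') _ _ _ Ht Ht').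
Qed.

Lemma is_fun_MN m f : is_fun m 1 (MNop m f).
Proof. split; unfold MNop.
  - intros u w (Hu & s & -> & _). auto.
  - intros u w w' (Hu & s & -> & H) (_ & s' & -> & H').
    f_equal. f_equal.
    destruct H as [[[A1 A2] A3]|[[[B1 B2] B3]|(a&b&[A1 A2]&[B1 B2]&C)]];
    destruct H' as [[[A1' A2'] A3']|[[[B1' B2'] B3']|(a'&b'&[A1' A2']&[B1' B2']&C')]];
    try tauto.
    + apply (glb_unique _ _ _ A2 A2').
    + apply (lub_unique _ _ _ B2 B2').
    + pose proof (glb_unique _ _ _ A2 A2'); pose proof (lub_unique _ _ _ B2 B2'); subst.
      destruct C as [[? ->]|[? ->]]; destruct C' as [[? ->]|[? ->]]; auto; tauto.
Qed.

Lemma RPrimRec_is_fun m n f : RPrimRec m n f -> is_fun m n f.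
Proof. induction 1.
  - apply is_fun_cst. - apply is_fun_cst. - apply is_fun_cst.
  - apply is_fun_juxt; auto.
  - eapply is_fun_comp; eauto.
  - apply is_fun_PR.
Qed.

(* Every real recursive function is functional; this is what makes the
   uniqueness requirement of PR checkable on concrete solutions. *)
Lemma RRec_is_fun m n f : RRec m n f -> is_fun m n f.
Proof. induction 1.
  - apply RPrimRec_is_fun; auto.
  - apply is_fun_juxt; auto.
  - eapply is_fun_comp; eauto.
  - apply is_fun_PR.
  - apply is_fun_MN.
Qed.

Lemma RInt_ext f g a b (pr1 : Riemann_integrable f a b) (pr2 : Riemann_integrable g a b) :
  (forall x, Rmin a b <= x <= Rmax a b -> f x = g x) -> RiemannInt pr1 = RiemannInt pr2.
Proof. intros H. destruct (Rle_dec a b).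
  - apply RiemannInt_P18; auto. intros x Hx. apply H. rewrite Rmin_left, Rmax_right; lra.
  - rewrite (RiemannInt_P8 pr1 (RiemannInt_P1 pr1)), (RiemannInt_P8 pr2 (RiemannInt_P1 pr2)).
    f_equal. apply RiemannInt_P18; [lra|]. intros x Hx. apply H.
    rewrite Rmin_right, Rmax_left; lra.
Qed.

(* [RiemannInt_P15] stated for the constant function written as a lambda. *)
Lemma RInt_const c a b (pr : Riemann_integrable (fun _ => c) a b) : RiemannInt pr = c * (b - a).
Proof. apply (RiemannInt_P15 pr). Qed.

Lemma dom_between h t x : is_interval (dom1 h) -> dom1 h 0 -> dom1 h t ->
  Rmin 0 t <= x <= Rmax 0 t -> dom1 h x.
Proof. intros I H0 Ht Hx. unfold Rmin, Rmax in Hx. destruct (Rle_dec 0 t).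
  - apply (I 0 t x); auto. - apply (I t 0 x); auto; lra. Qed.

Lemma dom1_Some (h : R -> option (list R)) t : dom1 h t -> exists y, h t = Some y.
Proof. unfold dom1; destruct (h t); eauto; congruence. Qed.

Lemma len1 (l : list R) : length l = 1%nat -> l = [nth 0 l 0].
Proof. destruct l as [|a [|b l]]; simpl; intros; try lia; auto. Qed.

Lemma len2 (l : list R) : length l = 2%nat -> l = [nth 0 l 0; nth 1 l 0].
Proof. destruct l as [|a [|b [|c l]]]; simpl; intros; try lia; auto. Qed.

Lemma len_app1 (v : list R) t : length (v ++ [t]) = S (length v).
Proof. rewrite length_app; simpl; lia. Qed.

Lemma firstn_app_len (v l : list R) : firstn (length v) (v ++ l) = v.
Proof. rewrite firstn_app, Nat.sub_diag, firstn_all; simpl; apply app_nil_r. Qed.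

Lemma nth_app_len (v l : list R) t d : nth (length v) (v ++ t :: l) d = t.
Proof. rewrite app_nth2, Nat.sub_diag; auto. Qed.

Lemma nth_map_d {A} (F : A -> R) l d j : (j < length l)%nat -> nth j (map F l) 0 = F (nth j l d).
Proof. revert j; induction l; simpl; intros j Hj; [lia|]. destruct j; auto. apply IHl; lia. Qed.

Lemma nth_map_seq_gen {A} (F : nat -> A) (d : A) i n : (i < n)%nat -> nth i (map F (seq 0 n)) d = F i.
Proof. intros H. rewrite nth_indep with (d' := F 0%nat) by (rewrite length_map, length_seq; auto).
  rewrite map_nth, seq_nth; auto. Qed.

Lemma in_map_seq {A} (F : nat -> A) m e : In e (map F (seq 0 m)) -> exists i, (i < m)%nat /\ e = F i.
Proof. intros H. apply in_map_iff in H. destruct H as (i & <- & Hi). apply in_seq in Hi. exists i; split; auto; lia. Qed.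

Lemma map_nth_seq0 (l : list R) : map (fun i => nth i l 0) (seq 0 (length l)) = l.
Proof. apply nth_ext with 0 0; rewrite ?length_map, ?length_seq; auto.
  intros n Hn. rewrite (nth_map_d _ _ 0%nat) by (rewrite length_seq; auto). rewrite seq_nth; auto. Qed.

Lemma PR_H_data m n f g v h t y : PR_H m n f g v h -> h t = Some y ->
  is_interval (dom1 h) /\ dom1 h 0 /\
  exists gam : R -> list R,
     (forall tau y, h tau = Some y -> g (v ++ tau :: y) (gam tau)) /\
     forall t y, h t = Some y ->
       length y = n /\
       exists fv, f v fv /\
         forall i, (i < n)%nat ->
           exists pr : Riemann_integrable (fun tau => nth i (gam tau) 0) 0 t,
             nth i y 0 = nth i fv 0 + RiemannInt pr.
Proof. intros (H1 & H2 & H3) Ht. destruct H1 as [H1|H1].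
  - rewrite H1 in Ht; discriminate.
  - tauto. Qed.

(* Differential recursion with a constant rate c is linear: its solution is
   c0 + c t on the whole line; uniqueness holds since any other solution has
   the constant integrand c on its domain. *)
Lemma PR_constant_rate m F0 g v c0 c : length v = m -> is_fun m 1 F0 -> is_fun (m+1+1) 1 g ->
  F0 v [c0] -> (forall tau y, length y = 1%nat -> g (v ++ tau :: y) [c]) ->
  forall t, PRop m 1 F0 g (v ++ [t]) [c0 + c * t].
Proof.
  intros Hv GF Gg HF Hg t. unfold PRop. subst m. rewrite len_app1. split; auto.
  rewrite firstn_app_len. rewrite app_nth2, Nat.sub_diag by lia. simpl.
  exists (fun tau => Some [c0 + c * tau]). split; auto.
  assert (HH : PR_H (length v) 1 F0 g v (fun tau => Some [c0 + c * tau])).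
  { split; [right; split|split].
    - intros x y z _ _ _; unfold dom1; congruence.
    - unfold dom1; congruence.
    - intros _; eauto.
    - exists (fun _ => [c]). split.
      + intros tau y E. injection E as <-. apply Hg; auto.
      + intros t1 y E. injection E as <-. split; auto. exists [c0]; split; auto.
        intros i Hi. assert (i = 0%nat) by lia. subst i. simpl.
        exists (RiemannInt_P14 0 t1 c). rewrite (RInt_const c 0 t1). ring. }
  split; auto.
  intros h' Hh' t1 y y' E E'. injection E as <-.
  destruct (PR_H_data _ _ _ _ _ _ _ _ Hh' E') as (I & D0 & gam & Hgam & Heq).
  destruct (Heq _ _ E') as (Ly & fv & Hfv & Hi).
  assert (fv = [c0]) by (apply (proj2 GF v); auto). subst fv.
  destruct (Hi 0%nat ltac:(lia)) as [pr Hpr].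
  rewrite (len1 y' Ly), Hpr. simpl. f_equal. f_equal.
  rewrite (RInt_ext _ (fun _ => c) 0 t1 pr (RiemannInt_P14 0 t1 c)).
  - rewrite RInt_const; ring.
  - intros x Hx. assert (Dx: dom1 h' x) by (apply (dom_between h' t1 x); auto; unfold dom1; congruence).
    destruct (dom1_Some _ _ Dx) as [yx Ex].
    destruct (Heq _ _ Ex) as (Lx & _).
    specialize (Hgam _ _ Ex). specialize (Hg x _ Lx).
    rewrite ((proj2 Gg) _ _ _ Hgam Hg). reflexivity.
Qed.

Lemma rr_c0 : RRec 0 1 (cst 0). Proof. apply rr_prim, rpr_zero. Qed.
Lemma rr_c1 : RRec 0 1 (cst 1). Proof. apply rr_prim, rpr_one. Qed.
Lemma rr_cm1 : RRec 0 1 (cst (-1)). Proof. apply rr_prim, rpr_mone. Qed.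

Definition const_fn (m : nat) (c : R) : PF := Defs.comp (cst c) (juxt m 0 (fun _ => cst 0)).

Lemma const_fn_spec m c u : length u = m -> const_fn m c u [c].
Proof. intros Hu. exists []. split.
  - split; auto. split; auto. intros; lia.
  - split; auto. Qed.

Lemma const_fn_rr m c : RRec 0 1 (cst c) -> RRec m 1 (const_fn m c).
Proof. intros H. eapply rr_comp; [exact H|]. apply rr_juxt. intros; lia. Qed.

(* The i-th projection R^m -> R: the last variable is the solution of
   y' = 1, y(0) = 0; an earlier variable is carried along with rate 0. *)
Fixpoint proj_fn (m i : nat) : PF :=
  match m with
  | O => cst 0
  | S m' => if Nat.ltb i m' then PRop m' 1 (proj_fn m' i) (const_fn (m'+1+1) 0)
            else PRop m' 1 (const_fn m' 0) (const_fn (m'+1+1) 1)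
  end.

Lemma split_last (u : list R) m : length u = S m -> exists v t, u = v ++ [t] /\ length v = m.
Proof. intros H. destruct (exists_last (l:=u)) as (v & t & E).
  - intro; subst; discriminate.
  - exists v, t. split; auto. subst. rewrite len_app1 in H. lia. Qed.

Lemma proj_fn_ok m i : (i < m)%nat -> RRec m 1 (proj_fn m i) /\
  forall u, length u = m -> proj_fn m i u [nth i u 0].
Proof.
  revert i. induction m as [|m IH]; intros i Hi; [lia|]. simpl.
  destruct (Nat.ltb_spec i m).
  - destruct (IH i H) as [R1 S1]. split.
    + apply rr_pr; auto. apply const_fn_rr, rr_c0.
    + intros u Hu. destruct (split_last u m Hu) as (v & t & -> & Hv).
      rewrite app_nth1 by lia.
      assert (EE: [nth i v 0] = [nth i v 0 + 0 * t]) by (f_equal; ring). rewrite EE.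
      apply PR_constant_rate; auto.
      * apply RRec_is_fun; auto.
      * apply RRec_is_fun, const_fn_rr, rr_c0.
      * intros; apply const_fn_spec. rewrite length_app; simpl; lia.
  - assert (i = m) by lia. subst i. split.
    + apply rr_pr; apply const_fn_rr; [apply rr_c0|apply rr_c1].
    + intros u Hu. destruct (split_last u m Hu) as (v & t & -> & Hv).
      rewrite app_nth2 by lia. rewrite Hv, Nat.sub_diag. simpl.
      assert (EE: [t] = [0 + 1 * t]) by (f_equal; ring). rewrite EE at 2.
      apply PR_constant_rate; auto.
      * apply RRec_is_fun, const_fn_rr, rr_c0.
      * apply RRec_is_fun, const_fn_rr, rr_c1.
      * apply const_fn_spec; auto.
      * intros; apply const_fn_spec. rewrite length_app; simpl; lia.
Qed.

Definition add_fn : PF := PRop 1 1 (proj_fn 1 0) (const_fn 3 1).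
Definition mul_fn : PF := PRop 1 1 (const_fn 1 0) (proj_fn 3 0).

(* x + y solves z' = 1 from z(0) = x; x * y solves z' = x from z(0) = 0. *)
Lemma add_fn_ok : RRec 2 1 add_fn /\ forall x y, add_fn [x; y] [x + y].
Proof. split.
  - apply rr_pr; [apply proj_fn_ok; lia| apply const_fn_rr, rr_c1].
  - intros x y. change [x; y] with ([x] ++ [y]). replace (x + y) with (x + 1 * y) by ring.
    apply PR_constant_rate; auto.
    + apply RRec_is_fun, proj_fn_ok; lia.
    + apply RRec_is_fun, const_fn_rr, rr_c1.
    + apply (proj2 (proj_fn_ok 1 0 ltac:(lia)) [x]); auto.
    + intros; apply const_fn_spec. simpl. rewrite H; auto.
Qed.

Lemma mul_fn_ok : RRec 2 1 mul_fn /\ forall x y, mul_fn [x; y] [x * y].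
Proof. split.
  - apply rr_pr; [apply const_fn_rr, rr_c0| apply proj_fn_ok; lia].
  - intros x y. change [x; y] with ([x] ++ [y]). replace (x * y) with (0 + x * y) by ring.
    apply PR_constant_rate; auto.
    + apply RRec_is_fun, const_fn_rr, rr_c0.
    + apply RRec_is_fun, proj_fn_ok; lia.
    + apply const_fn_spec; auto.
    + intros tau z Hz. apply (proj2 (proj_fn_ok 3 0 ltac:(lia))). simpl. rewrite Hz; auto.
Qed.

(* Expressions built from variables, -1, 0, 1, +, * and five primitives: sin,
   cos, a switch, an inverse and a constant.  The primitives are supplied by
   an environment, so that the compiler can already be used while the
   primitives themselves are being constructed. *)
Inductive expr := Var (i : nat) | Zero | One | MinusOne | Add (a b : expr) | Mul (a b : expr)
  | Sin (a : expr) | Cos (a : expr) | Sig (a : expr) | Inv (a : expr) | Bconst.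

Record env := mkenv { prim_sin : PF; prim_cos : PF; prim_sig : PF; prim_inv : PF;
  val_sin : R -> R; val_cos : R -> R; val_sig : R -> R; val_inv : R -> R;
  prim_b : PF; val_b : R }.

Fixpoint eval (E : env) (e : expr) (u : list R) : R :=
  match e with
  | Var i => nth i u 0 | Zero => 0 | One => 1 | MinusOne => -1
  | Add a b => eval E a u + eval E b u
  | Mul a b => eval E a u * eval E b u
  | Sin a => val_sin E (eval E a u) | Cos a => val_cos E (eval E a u)
  | Sig a => val_sig E (eval E a u) | Inv a => val_inv E (eval E a u)
  | Bconst => val_b E
  end.

(* The primitives sin and cos are only needed (and provided) on [0, +oo). *)
Fixpoint defined_at (E : env) (e : expr) (u : list R) : Prop :=
  match e with
  | Var _ | Zero | One | MinusOne | Bconst => True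
  | Add a b | Mul a b => defined_at E a u /\ defined_at E b u
  | Sin a | Cos a => defined_at E a u /\ 0 <= eval E a u
  | Sig a | Inv a => defined_at E a u
  end.

Fixpoint wf_expr (m : nat) (e : expr) : Prop :=
  match e with
  | Var i => (i < m)%nat | Zero | One | MinusOne | Bconst => True
  | Add a b | Mul a b => wf_expr m a /\ wf_expr m b
  | Sin a | Cos a | Sig a | Inv a => wf_expr m a
  end.

Definition pair2 (p q : PF) : nat -> PF := fun j => match j with O => p | _ => q end.

Fixpoint compile (E : env) (m : nat) (e : expr) : PF :=
  match e with
  | Var i => proj_fn m i | Zero => const_fn m 0 | One => const_fn m 1 | MinusOne => const_fn m (-1)
  | Add a b => Defs.comp add_fn (juxt m 2 (pair2 (compile E m a) (compile E m b)))
  | Mul a b => Defs.comp mul_fn (juxt m 2 (pair2 (compile E m a) (compile E m b)))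
  | Sin a => Defs.comp (prim_sin E) (compile E m a)
  | Cos a => Defs.comp (prim_cos E) (compile E m a)
  | Sig a => Defs.comp (prim_sig E) (compile E m a)
  | Inv a => Defs.comp (prim_inv E) (compile E m a)
  | Bconst => Defs.comp (prim_b E) (juxt m 0 (fun _ => cst 0))
  end.

Definition env_ok (E : env) : Prop :=
  RRec 1 1 (prim_sin E) /\ RRec 1 1 (prim_cos E) /\ RRec 1 1 (prim_sig E) /\ RRec 1 1 (prim_inv E) /\
  (forall x, 0 <= x -> prim_sin E [x] [val_sin E x]) /\ (forall x, 0 <= x -> prim_cos E [x] [val_cos E x]) /\
  (forall x, prim_sig E [x] [val_sig E x]) /\ (forall x, prim_inv E [x] [val_inv E x]) /\
  RRec 0 1 (prim_b E) /\ prim_b E [] [val_b E].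

Lemma juxt2 m p q u a b : length u = m -> p u [a] -> q u [b] -> juxt m 2 (pair2 p q) u [a; b].
Proof. intros. split; auto. split; auto. intros j Hj. destruct j as [|[|]]; simpl; auto; lia. Qed.

Lemma compile_ok E m e : env_ok E -> wf_expr m e -> RRec m 1 (compile E m e) /\
  forall u, length u = m -> defined_at E e u -> compile E m e u [eval E e u].
Proof.
  intros HE. destruct HE as (R1 & R2 & R3 & R4 & S1 & S2 & S3 & S4 & R5 & S5).
  induction e; simpl; intros W.
  - destruct (proj_fn_ok m i W); split; auto.
  - split; [apply const_fn_rr, rr_c0| intros; apply const_fn_spec; auto].
  - split; [apply const_fn_rr, rr_c1| intros; apply const_fn_spec; auto].
  - split; [apply const_fn_rr, rr_cm1| intros; apply const_fn_spec; auto].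
  - destruct W as [W1 W2]. destruct (IHe1 W1) as [A1 B1]. destruct (IHe2 W2) as [A2 B2]. split.
    + eapply rr_comp; [apply add_fn_ok|]. apply rr_juxt. intros [|[|]] _; simpl; auto.
    + intros u Hu [O1 O2]. exists [eval E e1 u; eval E e2 u]. split; [apply juxt2; auto| apply add_fn_ok].
  - destruct W as [W1 W2]. destruct (IHe1 W1) as [A1 B1]. destruct (IHe2 W2) as [A2 B2]. split.
    + eapply rr_comp; [apply mul_fn_ok|]. apply rr_juxt. intros [|[|]] _; simpl; auto.
    + intros u Hu [O1 O2]. exists [eval E e1 u; eval E e2 u]. split; [apply juxt2; auto| apply mul_fn_ok].
  - destruct (IHe W) as [A B]. split; [eapply rr_comp; eauto|].
    intros u Hu [O P]. exists [eval E e u]; split; auto.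
  - destruct (IHe W) as [A B]. split; [eapply rr_comp; eauto|].
    intros u Hu [O P]. exists [eval E e u]; split; auto.
  - destruct (IHe W) as [A B]. split; [eapply rr_comp; eauto|].
    intros u Hu O. exists [eval E e u]; split; auto.
  - destruct (IHe W) as [A B]. split; [eapply rr_comp; eauto|].
    intros u Hu O. exists [eval E e u]; split; auto.
  - split.
    + eapply rr_comp; [exact R5|]. apply rr_juxt; intros; lia.
    + intros u Hu _. exists []. split; auto. split; auto. split; auto. intros; lia.
Qed.

Definition compile_vec (E : env) (m : nat) (es : list expr) : PF :=
  juxt m (length es) (fun j => compile E m (nth j es Zero)).

Lemma compile_vec_ok E m es : env_ok E -> (forall e, In e es -> wf_expr m e) ->
  RRec m (length es) (compile_vec E m es) /\
  forall u, length u = m -> (forall e, In e es -> defined_at E e u) ->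
    compile_vec E m es u (map (fun e => eval E e u) es).
Proof. intros HE W. split.
  - apply rr_juxt. intros j Hj. apply compile_ok; auto. apply W, nth_In; auto.
  - intros u Hu O. split; auto. rewrite length_map. split; auto.
    intros j Hj. rewrite (nth_map_d _ _ Zero) by auto. apply compile_ok; auto; [apply W| apply O]; apply nth_In; auto.
Qed.

(* Placeholder environment (every primitive is the identity), sufficient for
   polynomial expressions. *)
Definition poly_env : env :=
  mkenv (proj_fn 1 0) (proj_fn 1 0) (proj_fn 1 0) (proj_fn 1 0)
        (fun x => x) (fun x => x) (fun x => x) (fun x => x) (cst 0) 0.

Lemma poly_env_ok : env_ok poly_env.
Proof. destruct (proj_fn_ok 1 0 ltac:(lia)) as [A B].
  unfold env_ok; simpl; repeat split; auto; try (intros; apply (B [x]); auto). apply rr_c0. Qed.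

Lemma cont_RI f a b : continuity f -> Riemann_integrable f a b.
Proof. intros C. destruct (Rle_dec a b).
  - apply continuity_implies_RiemannInt; auto.
  - apply RiemannInt_P1, continuity_implies_RiemannInt; [lra| auto]. Qed.

Lemma FTC F f : (forall x, derivable_pt_lim F x (f x)) -> continuity f ->
  forall a b (pr : Riemann_integrable f a b), RiemannInt pr = F b - F a.
Proof. intros D C a b pr.
  set (d := fun x => exist (fun l => derivable_pt_abs F x l) (f x) (D x) : derivable_pt F x).
  set (G := {| c1 := F; diff0 := d; cont1 := C |}). exact (FTC_Riemann G pr). Qed.

Lemma int_sin A a b (pr : Riemann_integrable (fun x => A * sin x) a b) :
  RiemannInt pr = A * (cos a - cos b).
Proof. rewrite (FTC (fun x => - A * cos x) (fun x => A * sin x)).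
  - ring.
  - intros x. replace (A * sin x) with ((- A) * (- sin x)) by ring.
    apply (derivable_pt_lim_scal cos (-A) x), derivable_pt_lim_cos.
  - apply (continuity_scal sin A), continuity_sin.
Qed.

Lemma RI_sin A a b : Riemann_integrable (fun x => A * sin x) a b.
Proof. apply cont_RI, (continuity_scal sin A), continuity_sin. Qed.

Lemma int_cos1 a b (pr : Riemann_integrable cos a b) : RiemannInt pr = sin b - sin a.
Proof. apply (FTC sin cos); [apply derivable_pt_lim_sin| apply continuity_cos]. Qed.

Lemma int_msin a b (pr : Riemann_integrable (fun x => -1 * sin x) a b) : RiemannInt pr = cos b - cos a.
Proof. apply (FTC cos (fun x => -1 * sin x)).
  - intros x. replace (-1 * sin x) with (- sin x) by ring. apply derivable_pt_lim_cos.
  - apply (continuity_scal sin (-1)), continuity_sin. Qed.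

Lemma RI_lin f g h a b l : (forall x, h x = f x + l * g x) ->
  Riemann_integrable f a b -> Riemann_integrable g a b -> Riemann_integrable h a b.
Proof. intros E p1 p2.
  apply Riemann_integrable_ext with (f := fun x => f x + l * g x).
  - intros x _; auto.
  - apply RiemannInt_P10; auto. Qed.

Lemma RInt_lin f g h a b l (pr1 : Riemann_integrable f a b) (pr2 : Riemann_integrable g a b)
  (pr : Riemann_integrable h a b) : (forall x, h x = f x + l * g x) ->
  RiemannInt pr = RiemannInt pr1 + l * RiemannInt pr2.
Proof. intros E. rewrite <- (RiemannInt_P13 pr1 pr2 (RiemannInt_P10 l pr1 pr2)).
  apply RInt_ext. intros; auto. Qed.

Lemma RInt_nonneg f a b (pr : Riemann_integrable f a b) : a <= b ->
  (forall x, a < x < b -> 0 <= f x) -> 0 <= RiemannInt pr.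
Proof. intros H P.
  assert (RiemannInt (RiemannInt_P14 a b 0) <= RiemannInt pr) by (apply RiemannInt_P19; auto).
  rewrite (RiemannInt_P15 (RiemannInt_P14 a b 0)) in H0. lra. Qed.

Lemma RInt_le_const f a b B (pr : Riemann_integrable f a b) : a <= b ->
  (forall x, a < x < b -> f x <= B) -> RiemannInt pr <= B * (b - a).
Proof. intros H P. rewrite <- (RiemannInt_P15 (RiemannInt_P14 a b B)).
  apply RiemannInt_P19; auto. Qed.

(* If each e_i is the integral from a of rho_i and
   |rho_i| <= L max_j |e_j|, then e = 0 on [a, b]: on a window of length
   1/(2L) each iteration of the integral inequality halves a uniform bound. *)

Lemma bound_combine (P : nat -> R -> Prop) N :
  (forall i B B', B <= B' -> P i B -> P i B') ->
  (forall i, (i < N)%nat -> exists B, P i B) -> exists B, forall i, (i < N)%nat -> P i B.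
Proof. intros M. induction N; intros H.
  - exists 0; intros; lia.
  - destruct IHN as [B HB]; [intros; apply H; lia|].
    destruct (H N ltac:(lia)) as [B' HB'].
    exists (Rmax B B'). intros i Hi. destruct (Nat.eq_dec i N).
    + subst; eapply M; [|eauto]; apply Rmax_r.
    + eapply M; [apply Rmax_l|]. apply HB; lia.
Qed.

Lemma small_zero (x B0 : R) : 0 <= B0 -> (forall n, Rabs x <= B0 * (/2)^n) -> x = 0.
Proof. intros HB H. destruct (Req_dec x 0) as [|Hx]; auto. exfalso.
  assert (P : 0 < Rabs x) by (apply Rabs_pos_lt; auto).
  destruct (Req_dec B0 0) as [E|E].
  - specialize (H 0%nat). rewrite E in H. lra.
  - destruct (pow_lt_1_zero (/2) ltac:(rewrite Rabs_pos_eq; lra) (Rabs x / B0)) as [n Hn].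
    + apply Rdiv_lt_0_compat; lra.
    + specialize (Hn n ltac:(lia)). specialize (H n).
      rewrite Rabs_pos_eq in Hn by (apply pow_le; lra).
      apply (Rmult_lt_compat_l B0) in Hn; [|lra].
      replace (B0 * (Rabs x / B0)) with (Rabs x) in Hn by (field; auto). lra.
Qed.

Section Gronwall.
Variables (N : nat) (e rho : nat -> R -> R) (a b L : R).
Hypothesis HL : 0 <= L.
Hypothesis Hint : forall i x, (i < N)%nat -> a <= x <= b ->
  exists pr : Riemann_integrable (rho i) a x, e i x = RiemannInt pr.
Hypothesis Hbd : forall i x B, (i < N)%nat -> a < x < b ->
  (forall j, (j < N)%nat -> Rabs (e j x) <= B) -> Rabs (rho i x) <= L * B.

Lemma gron_restart c i x : a <= c -> c <= x <= b -> (i < N)%nat ->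
  (forall i, (i < N)%nat -> e i c = 0) ->
  exists pr : Riemann_integrable (rho i) c x, e i x = RiemannInt pr.
Proof. intros Hac Hx Hi Hc.
  destruct (Hint i x Hi ltac:(lra)) as [pr Hpr].
  pose (pr1 := RiemannInt_P22 pr (conj Hac (proj1 Hx))).
  pose (pr2 := RiemannInt_P23 pr (conj Hac (proj1 Hx))).
  exists pr2. rewrite Hpr, <- (RiemannInt_P26 pr1 pr2 pr).
  destruct (Hint i c Hi ltac:(lra)) as [pr0 H0]. rewrite (Hc i Hi) in H0.
  rewrite (RiemannInt_P5 pr1 pr0), <- H0. ring.
Qed.

Lemma gron_bounded c d : a <= c -> c <= d <= b -> (forall i, (i < N)%nat -> e i c = 0) ->
  exists B0, 0 <= B0 /\ forall i, (i < N)%nat -> forall x, c <= x <= d -> Rabs (e i x) <= B0.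
Proof. intros Hac Hcd Hc.
  destruct (bound_combine (fun i B => 0 <= B /\ forall x, c <= x <= d -> Rabs (e i x) <= B) N) as [B HB].
  - intros i B B' Hle [H1 H2]. split; [lra|]. intros x Hx; specialize (H2 x Hx); lra.
  - intros i Hi. destruct (gron_restart c i d Hac ltac:(lra) Hi Hc) as [prd _].
    pose (pa := RiemannInt_P16 prd).
    exists (RiemannInt pa). split; [apply RInt_nonneg; [lra|]; intros; apply Rabs_pos|].
    intros x Hx. destruct (gron_restart c i x Hac ltac:(lra) Hi Hc) as [prx Ex]. rewrite Ex.
    pose (pax := RiemannInt_P16 prx).
    eapply Rle_trans; [apply (RiemannInt_P17 prx pax); lra|].
    pose (p1 := RiemannInt_P22 pa (conj (proj1 Hx) (proj2 Hx))).
    pose (p2 := RiemannInt_P23 pa (conj (proj1 Hx) (proj2 Hx))).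
    rewrite <- (RiemannInt_P26 p1 p2 pa), (RiemannInt_P5 pax p1).
    assert (0 <= RiemannInt p2) by (apply RInt_nonneg; [lra|]; intros; apply Rabs_pos). lra.
  - exists (Rmax 0 B). split; [apply Rmax_l|]. intros i Hi x Hx.
    destruct (HB i Hi) as [_ H]. eapply Rle_trans; [apply H; auto|apply Rmax_r].
Qed.

Lemma gron_step c d : a <= c -> c <= d <= b -> L * (d - c) <= /2 ->
  (forall i, (i < N)%nat -> e i c = 0) -> forall i x, (i < N)%nat -> c <= x <= d -> e i x = 0.
Proof.
  intros Hac Hcd Hsm Hc.
  destruct (gron_bounded c d Hac Hcd Hc) as (B0 & HB0 & Hb0).
  assert (Halve : forall n i x, (i < N)%nat -> c <= x <= d -> Rabs (e i x) <= B0 * (/2)^n).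
  { induction n; intros i x Hi Hx.
    - simpl; rewrite Rmult_1_r; auto.
    - destruct (gron_restart c i x Hac ltac:(lra) Hi Hc) as [prx Ex]. rewrite Ex.
      pose (pax := RiemannInt_P16 prx).
      eapply Rle_trans; [apply (RiemannInt_P17 prx pax); lra|].
      eapply Rle_trans; [apply (RInt_le_const _ _ _ (L * (B0 * (/2)^n))); [lra|]|].
      + intros y Hy. apply Hbd; [auto|lra|]. intros j Hj. apply IHn; auto; lra.
      + simpl. assert (0 <= B0 * (/2)^n) by (apply Rmult_le_pos; auto; apply pow_le; lra).
        assert (L * (x - c) <= /2) by (apply Rle_trans with (L * (d - c)); auto; apply Rmult_le_compat_l; lra).
        replace (L * (B0 * (/ 2) ^ n) * (x - c)) with ((L * (x - c)) * (B0 * (/ 2) ^ n)) by ring.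
        replace (B0 * (/ 2 * (/ 2) ^ n)) with (/2 * (B0 * (/ 2) ^ n)) by ring.
        apply Rmult_le_compat_r; auto. }
  intros i x Hi Hx. apply (small_zero _ B0); [auto|]. intros n; apply Halve; auto.
Qed.

Lemma gronwall : forall i x, (i < N)%nat -> a <= x <= b -> e i x = 0.
Proof.
  set (dl := / (2 * L + 2)).
  assert (Hd : 0 < dl) by (unfold dl; apply Rinv_0_lt_compat; lra).
  assert (Hdl : L * dl <= /2).
  { unfold dl. apply (Rmult_le_reg_r (2 * L + 2)); [lra|].
    rewrite Rmult_assoc, Rinv_l by lra. lra. }
  assert (Windows : forall n i x, (i < N)%nat -> a <= x <= b -> x <= a + INR n * dl -> e i x = 0).
  { induction n; intros i x Hi Hx Hn.
    - simpl in Hn. assert (x = a) by lra. subst x.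
      destruct (Hint i a Hi Hx) as [pr Hp]. rewrite Hp. apply RiemannInt_P9.
    - set (c := a + INR n * dl). assert (Hn0 : 0 <= INR n) by apply pos_INR.
      destruct (Rle_dec x c) as [Hxc|Hxc]; [apply (IHn i x Hi Hx Hxc)|].
      assert (Hcb : c <= b) by lra.
      apply (gron_step c (Rmin b (c + dl))); auto.
      + unfold c; nra.
      + split; [unfold Rmin; destruct (Rle_dec b (c + dl)); lra| apply Rmin_l].
      + apply Rle_trans with (L * dl); auto. apply Rmult_le_compat_l; auto.
        unfold Rmin; destruct (Rle_dec b (c + dl)); lra.
      + intros j Hj. apply IHn; [auto| split; unfold c in *; nra | unfold c; lra].
      + split; [lra|]. rewrite S_INR in Hn. unfold Rmin; destruct (Rle_dec b (c + dl)); unfold c; lra. }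
  intros i x Hi Hx. destruct (INR_unbounded ((b - a) / dl)) as [n Hn].
  apply (Windows n); auto. apply Rmult_gt_compat_r with (r := dl) in Hn; auto.
  unfold Rdiv in Hn. rewrite Rmult_assoc, Rinv_l, Rmult_1_r in Hn by lra. lra.
Qed.
End Gronwall.

Definition sol_val (h : R -> option (list R)) (x : R) : list R :=
  match h x with Some y => y | None => [] end.

Lemma PR_H_on_segment m n f g v h t1 y x : PR_H m n f g v h -> h t1 = Some y ->
  0 <= x <= t1 -> h x = Some (sol_val h x).
Proof. intros Hh E Hx.
  destruct (PR_H_data _ _ _ _ _ _ _ _ Hh E) as (I & D0 & _).
  assert (Dx : dom1 h x).
  { apply (dom_between h t1 x); auto; [unfold dom1; congruence|].
    rewrite Rmin_left, Rmax_right; lra. }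
  unfold sol_val. unfold dom1 in Dx. destruct (h x); congruence.
Qed.

(* The clock: (sin, cos) is the solution of y1' = y2, y2' = -y1 from (0, 1). *)
Definition clock_init : PF := compile_vec poly_env 0 [Zero; One].
Definition clock_rhs : PF := compile_vec poly_env 3 [Var 2; Mul MinusOne (Var 1)].
Definition clock_fn : PF := PRop 0 2 clock_init clock_rhs.

Lemma clock_init_ok : RRec 0 2 clock_init /\ clock_init [] [0; 1].
Proof. destruct (compile_vec_ok poly_env 0 [Zero; One] poly_env_ok) as [A B].
  - intros e [<-|[<-|[]]]; simpl; auto.
  - split; [exact A|]. apply (B []); auto. intros e [<-|[<-|[]]]; simpl; auto. Qed.

Lemma clock_rhs_ok : RRec 3 2 clock_rhs /\ forall t s c, clock_rhs [t; s; c] [c; -1 * s].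
Proof. destruct (compile_vec_ok poly_env 3 [Var 2; Mul MinusOne (Var 1)] poly_env_ok) as [A B].
  - intros e [<-|[<-|[]]]; simpl; auto; split; auto; lia.
  - split; [exact A|]. intros t s c. apply (B [t; s; c]); auto.
    intros e [<-|[<-|[]]]; simpl; auto. Qed.

Lemma clock_fn_rr : RRec 1 2 clock_fn.
Proof. apply rr_pr; [apply clock_init_ok| apply clock_rhs_ok]. Qed.

Definition clock_h (tau : R) : option (list R) :=
  if Rle_dec 0 tau then Some [sin tau; cos tau] else None.

Lemma clock_h_dom x : dom1 clock_h x <-> 0 <= x.
Proof. unfold dom1, clock_h. destruct (Rle_dec 0 x); split; intros; try congruence; lra. Qed.

Definition clock_rate (tau : R) : list R := [cos tau; -1 * sin tau].

Lemma clock_rate_integral i x (Hi : (i < 2)%nat) (pr : Riemann_integrable (fun tau => nth i (clock_rate tau) 0) 0 x) :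
  RiemannInt pr = nth i [sin x; cos x] 0 - nth i [0; 1] 0.
Proof. destruct i as [|[|]]; [| |lia].
  - replace (RiemannInt pr) with (sin x - sin 0) by (symmetry; apply (int_cos1 0 x pr)). simpl; rewrite sin_0; ring.
  - replace (RiemannInt pr) with (cos x - cos 0) by (symmetry; apply (int_msin 0 x pr)). simpl; rewrite cos_0; ring.
Qed.

Lemma clock_rate_integrable i x (Hi : (i < 2)%nat) : Riemann_integrable (fun tau => nth i (clock_rate tau) 0) 0 x.
Proof. destruct i as [|[|]]; [| |lia].
  - exact (cont_RI cos 0 x continuity_cos).
  - exact (cont_RI _ 0 x (continuity_scal sin (-1) continuity_sin)).
Qed.

Lemma clock_h_in_H : PR_H 0 2 clock_init clock_rhs [] clock_h.
Proof.
  split; [right; split|split].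
  - intros x y z Hx Hy Hz. apply clock_h_dom in Hx; apply clock_h_dom in Hy. apply clock_h_dom; lra.
  - apply clock_h_dom; lra.
  - intros _; exists [0; 1]; apply clock_init_ok.
  - exists clock_rate. split.
    + intros tau y E. unfold clock_h in E. destruct (Rle_dec 0 tau); [|discriminate].
      injection E as <-. simpl. apply clock_rhs_ok.
    + intros t y E. unfold clock_h in E. destruct (Rle_dec 0 t); [|discriminate].
      injection E as <-. split; auto. exists [0; 1]. split; [apply clock_init_ok|].
      intros i Hi. exists (clock_rate_integrable i t Hi). rewrite clock_rate_integral; auto. ring.
Qed.

(* Uniqueness: the system is linear with Lipschitz constant 1, so Gronwall
   applies to the difference of any solution with (sin, cos). *)
Lemma clock_unique h' t1 y' : PR_H 0 2 clock_init clock_rhs [] h' -> 0 <= t1 ->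
  h' t1 = Some y' -> y' = [sin t1; cos t1].
Proof.
  intros Hh' H1 E'.
  destruct (PR_H_data _ _ _ _ _ _ _ _ Hh' E') as (_ & _ & gam & Hgam & Heq).
  set (Y := sol_val h').
  assert (HY : forall x, 0 <= x <= t1 -> h' x = Some (Y x))
    by (intros x Hx; apply (PR_H_on_segment _ _ _ _ _ _ _ _ x Hh' E' Hx)).
  set (e := fun i x => nth i (Y x) 0 + -1 * nth i [sin x; cos x] 0).
  set (rho := fun i x => nth i (gam x) 0 + -1 * nth i (clock_rate x) 0).
  assert (Z : forall i x, (i < 2)%nat -> 0 <= x <= t1 -> e i x = 0).
  { apply (gronwall 2 e rho 0 t1 1); [lra| |].
    - intros i x Hi Hx. destruct (Heq _ _ (HY x Hx)) as (Lx & fv & Hfv & Hint).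
      assert (fv = [0; 1]) by (apply (proj2 (RRec_is_fun _ _ _ (proj1 clock_init_ok)) []); auto; apply clock_init_ok).
      subst fv. destruct (Hint i Hi) as [pr Hpr].
      pose (pr2 := clock_rate_integrable i x Hi).
      exists (RI_lin _ _ (rho i) 0 x (-1) (fun _ => eq_refl) pr pr2).
      unfold e. rewrite Hpr, (RInt_lin _ _ _ _ _ (-1) pr pr2 _ (fun _ => eq_refl)), clock_rate_integral by auto.
      destruct i as [|[|]]; simpl; [ring|ring|lia].
    - intros i x B Hi Hx HB.
      assert (Hx' : 0 <= x <= t1) by lra.
      destruct (Heq _ _ (HY x Hx')) as (Lx & _).
      pose proof (Hgam _ _ (HY x Hx')) as G. rewrite (len2 _ Lx) in G. simpl in G.
      pose proof (proj2 clock_rhs_ok x (nth 0 (Y x) 0) (nth 1 (Y x) 0)) as G2.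
      pose proof (proj2 (RRec_is_fun _ _ _ (proj1 clock_rhs_ok)) _ _ _ G G2) as Eg.
      unfold rho. rewrite Eg. specialize (HB 0%nat ltac:(lia)) as HB0. specialize (HB 1%nat ltac:(lia)).
      unfold e in HB0, HB. destruct i as [|[|]]; simpl in *; [lra| |lia].
      replace (-1 * nth 0 (Y x) 0 + -1 * (-1 * sin x)) with (- (nth 0 (Y x) 0 + -1 * sin x)) by ring.
      rewrite Rabs_Ropp. lra. }
  destruct (Heq _ _ E') as (L' & _).
  rewrite (len2 _ L'). assert (Yt : Y t1 = y') by (rewrite HY in E' by lra; congruence).
  pose proof (Z 0%nat t1 ltac:(lia) ltac:(lra)) as Z0. pose proof (Z 1%nat t1 ltac:(lia) ltac:(lra)) as Z1.
  unfold e in Z0, Z1. rewrite Yt in Z0, Z1. simpl in Z0, Z1. f_equal; [|f_equal]; lra.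
Qed.

Lemma clock_fn_spec t : 0 <= t -> clock_fn [t] [sin t; cos t].
Proof.
  intros Ht. unfold clock_fn, PRop. split; auto. simpl.
  exists clock_h. split; [|unfold clock_h; destruct (Rle_dec 0 t); [auto|lra]].
  split; [apply clock_h_in_H|].
  intros h' Hh' t1 y y' E E'.
  unfold clock_h in E. destruct (Rle_dec 0 t1) as [H1|]; [|discriminate]. injection E as <-.
  symmetry. apply (clock_unique h' t1 y' Hh' H1 E').
Qed.

Section MinimizationByZeros.
Variables (m : nat) (F : PF) (v : list R) (phi : R -> R).
Hypothesis Hv : length v = m.
Hypothesis GF : is_fun (S m) 1 F.
Hypothesis Hphi : forall t, F (v ++ [t]) [phi t].

Lemma zero_iff t : F (v ++ [t]) [0] <-> phi t = 0.
Proof. split; intros H.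
  - pose proof (proj2 GF _ _ _ H (Hphi t)). injection H0; auto.
  - rewrite <- H; auto. Qed.

Lemma tplus_of a : 0 <= a -> phi a = 0 -> (forall t, 0 <= t < a -> phi t <> 0) -> tplus F v a.
Proof. intros H0 Ha Hn. split.
  - exists a. split; auto. split; [apply zero_iff; auto|]. intros; eauto.
  - split.
    + intros t [Ht Hz]. apply zero_iff in Hz. destruct (Rlt_dec t a); [|lra].
      exfalso; apply (Hn t); auto.
    + intros b Hb. apply Hb. split; auto. apply zero_iff; auto.
Qed.

Lemma tminus_of b : b <= 0 -> phi b = 0 -> (forall t, b < t <= 0 -> phi t <> 0) -> tminus F v b.
Proof. intros H0 Hb Hn. split.
  - exists b. split; auto. split; [apply zero_iff; auto|]. intros; eauto.
  - split.
    + intros t [Ht Hz]. apply zero_iff in Hz. destruct (Rlt_dec b t); [|lra].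
      exfalso; apply (Hn t); auto.
    + intros c Hc. apply Hc. split; auto. apply zero_iff; auto.
Qed.

Lemma no_plus : (forall t, 0 <= t -> phi t <> 0) -> ~ tplus_defined F v.
Proof. intros H (t & Ht & Hz & _). apply zero_iff in Hz. apply (H t); auto. Qed.
Lemma no_minus : (forall t, t <= 0 -> phi t <> 0) -> ~ tminus_defined F v.
Proof. intros H (t & Ht & Hz & _). apply zero_iff in Hz. apply (H t); auto. Qed.

Lemma MN_pos_root a : 0 <= a -> phi a = 0 -> (forall t, 0 <= t < a -> phi t <> 0) ->
  (forall t, t <= 0 -> phi t <> 0) -> MNop m F v [a].
Proof. intros. split; auto. exists a. split; auto. left. split; [apply tplus_of| apply no_minus]; auto. Qed.

Lemma MN_neg_root b : b <= 0 -> phi b = 0 -> (forall t, b < t <= 0 -> phi t <> 0) ->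
  (forall t, 0 <= t -> phi t <> 0) -> MNop m F v [b].
Proof. intros. split; auto. exists b. split; auto. right; left. split; [apply tminus_of| apply no_plus]; auto. Qed.

Lemma MN_two_sided a b : 0 <= a -> phi a = 0 -> (forall t, 0 <= t < a -> phi t <> 0) ->
  b <= 0 -> phi b = 0 -> (forall t, b < t <= 0 -> phi t <> 0) ->
  MNop m F v [if Rlt_dec a (-b) then a else b].
Proof. intros. split; auto. eexists. split; [reflexivity|]. right; right.
  exists a, b. split; [apply tplus_of; auto|]. split; [apply tminus_of; auto|].
  destruct (Rlt_dec a (-b)); [left|right]; auto. Qed.

(* Exactly two zeros z2 < z1: MN returns the one closest to 0 (z2 on a tie). *)
Lemma MN_two z1 z2 : z2 < z1 -> (forall t, phi t = 0 <-> t = z1 \/ t = z2) ->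
  MNop m F v [if Rle_dec 0 z2 then z2 else if Rle_dec z1 0 then z1
              else if Rlt_dec z1 (-z2) then z1 else z2].
Proof. intros Hz Z.
  assert (Z1 : phi z1 = 0) by (apply Z; auto). assert (Z2 : phi z2 = 0) by (apply Z; auto).
  assert (NZ : forall t, t <> z1 -> t <> z2 -> phi t <> 0) by (intros t H1 H2 H; apply Z in H; tauto).
  destruct (Rle_dec 0 z2).
  - destruct (Req_dec z2 0) as [E|E].
    + rewrite E in Z2 |- *. pose proof (MN_two_sided 0 0 ltac:(lra) Z2 ltac:(intros; lra)
         ltac:(lra) Z2 ltac:(intros; lra)) as M.
      destruct (Rlt_dec 0 (-0)); [lra|]. auto.
    + apply MN_pos_root; auto; intros; apply NZ; lra.
  - destruct (Rle_dec z1 0).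
    + destruct (Req_dec z1 0) as [E|E].
      * rewrite E in Z1 |- *. pose proof (MN_two_sided 0 0 ltac:(lra) Z1 ltac:(intros; lra)
         ltac:(lra) Z1 ltac:(intros; lra)) as M.
        destruct (Rlt_dec 0 (-0)); [lra|]. auto.
      * apply MN_neg_root; auto; intros; apply NZ; lra.
    + apply MN_two_sided; auto; try lra; intros; apply NZ; lra.
Qed.

Lemma MN_one z : (forall t, phi t = 0 <-> t = z) -> MNop m F v [z].
Proof. intros Z. assert (Z0 : phi z = 0) by (apply Z; auto).
  assert (NZ : forall t, t <> z -> phi t <> 0) by (intros t H1 H; apply Z in H; tauto).
  destruct (Rlt_dec 0 z).
  - apply MN_pos_root; auto; [lra| |]; intros; apply NZ; lra.
  - destruct (Rlt_dec z 0).
    + apply MN_neg_root; auto; [lra| |]; intros; apply NZ; lra.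
    + assert (z = 0) by lra. subst z.
      pose proof (MN_two_sided 0 0 ltac:(lra) Z0 ltac:(intros; lra) ltac:(lra) Z0 ltac:(intros; lra)) as M.
      destruct (Rlt_dec 0 (-0)); [lra|]. auto.
Qed.

Lemma MN_all : (forall t, phi t = 0) -> MNop m F v [0].
Proof. intros Z. pose proof (MN_two_sided 0 0 ltac:(lra) (Z 0) ltac:(intros; lra) ltac:(lra) (Z 0) ltac:(intros; lra)) as M.
  destruct (Rlt_dec 0 (-0)); [lra|]. auto. Qed.
End MinimizationByZeros.


(* A switch: sig_val x is the zero closest to 0 of t |-> (t+x)^2 - 1; the
   expression theta below turns it into the indicator of [0, +oo). *)
Definition sig_expr : expr := Mul (Add (Add (Var 1) (Var 0)) MinusOne) (Add (Add (Var 1) (Var 0)) One).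
Definition sig_fn : PF := MNop 1 (compile poly_env 2 sig_expr).
Definition sig_val (x : R) : R := if Rlt_dec 0 x then 1 - x else -1 - x.

Lemma sig_fn_ok : RRec 1 1 sig_fn /\ forall x, sig_fn [x] [sig_val x].
Proof.
  assert (C : RRec 2 1 (compile poly_env 2 sig_expr) /\ forall u, length u = 2%nat -> compile poly_env 2 sig_expr u [eval poly_env sig_expr u]).
  { destruct (compile_ok poly_env 2 sig_expr poly_env_ok) as [A B]; [simpl; repeat split; lia|]. split; auto. intros; apply B; simpl; auto. }
  split; [apply rr_mn; apply C|]. intros x.
  assert (M := MN_two 1 (compile poly_env 2 sig_expr) [x] (fun t => (t + x + -1) * (t + x + 1)) eq_refl
    (RRec_is_fun _ _ _ (proj1 C)) (fun t => proj2 C [x; t] eq_refl) (1 - x) (-1 - x) ltac:(lra)).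
  assert (Z : forall t, (t + x + -1) * (t + x + 1) = 0 <-> t = 1 - x \/ t = -1 - x).
  { intros t; split; intros H.
    - apply Rmult_integral in H; destruct H; [left|right]; lra.
    - destruct H; subst; ring. }
  specialize (M Z). unfold sig_fn.
  replace (sig_val x) with (if Rle_dec 0 (-1 - x) then -1 - x else if Rle_dec (1 - x) 0 then 1 - x
              else if Rlt_dec (1 - x) (- (-1 - x)) then 1 - x else -1 - x); auto.
  unfold sig_val. destruct (Rle_dec 0 (-1 - x)); destruct (Rle_dec (1 - x) 0);
    destruct (Rlt_dec (1 - x) (- (-1 - x))); destruct (Rlt_dec 0 x); lra.
Qed.

(* The reciprocal (with 1/0 = 0): the unique zero of t |-> x^2 t - x. *)
Definition inv_expr : expr := Add (Mul (Mul (Var 0) (Var 0)) (Var 1)) (Mul MinusOne (Var 0)).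
Definition inv_fn : PF := MNop 1 (compile poly_env 2 inv_expr).

Lemma inv_fn_ok : RRec 1 1 inv_fn /\ forall x, inv_fn [x] [/ x].
Proof.
  assert (C : RRec 2 1 (compile poly_env 2 inv_expr) /\ forall u, length u = 2%nat -> compile poly_env 2 inv_expr u [eval poly_env inv_expr u]).
  { destruct (compile_ok poly_env 2 inv_expr poly_env_ok) as [A B]; [simpl; repeat split; lia|]. split; auto. intros; apply B; simpl; auto. }
  split; [apply rr_mn; apply C|]. intros x. unfold inv_fn.
  pose proof (fun t => proj2 C [x; t] eq_refl) as H. simpl in H.
  destruct (Req_dec x 0) as [E|E].
  - subst x. rewrite Rinv_0. apply (MN_all 1 _ [0] (fun t => 0 * 0 * t + -1 * 0) eq_refl (RRec_is_fun _ _ _ (proj1 C)) H).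
    intros; ring.
  - apply (MN_one 1 _ [x] (fun t => x * x * t + -1 * x) eq_refl (RRec_is_fun _ _ _ (proj1 C)) H).
    intros t; split; intros Ht.
    + replace (x * x * t + -1 * x) with (x * (x * t - 1)) in Ht by ring.
      apply Rmult_integral in Ht. destruct Ht; [contradiction|].
      field_simplify_eq; auto. lra.
    + subst t. field; auto.
Qed.

Definition sin_fn : PF := Defs.comp (proj_fn 2 0) clock_fn.
Definition cos_fn : PF := Defs.comp (proj_fn 2 1) clock_fn.

(* All primitives but the constant, which is still the placeholder 0. *)
Definition trig_env : env := mkenv sin_fn cos_fn sig_fn inv_fn sin cos sig_val (fun x => / x) (cst 0) 0.

Lemma trig_env_ok : env_ok trig_env.
Proof.
  destruct (proj_fn_ok 2 0 ltac:(lia)) as [A0 B0]. destruct (proj_fn_ok 2 1 ltac:(lia)) as [A1 B1].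
  unfold env_ok; simpl. repeat split.
  - eapply rr_comp; [exact A0| apply clock_fn_rr].
  - eapply rr_comp; [exact A1| apply clock_fn_rr].
  - apply sig_fn_ok. - apply inv_fn_ok.
  - intros x Hx. exists [sin x; cos x]. split; [apply clock_fn_spec; auto| apply (B0 [sin x; cos x]); auto].
  - intros x Hx. exists [sin x; cos x]. split; [apply clock_fn_spec; auto| apply (B1 [sin x; cos x]); auto].
  - apply sig_fn_ok. - apply inv_fn_ok. - apply rr_c0.
Qed.

(* The constant b = -sqrt(pi/2): the zeros of t |-> cos (t^2) closest to 0
   are +-sqrt(pi/2), a tie resolved towards the negative one; 2 b^2 = pi. *)
Definition b_expr : expr := Cos (Mul (Var 0) (Var 0)).
Definition b_fn : PF := MNop 0 (compile trig_env 1 b_expr).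
Definition b_val : R := - sqrt (PI / 2).

Lemma b_fn_ok : RRec 0 1 b_fn /\ b_fn [] [b_val].
Proof.
  destruct (compile_ok trig_env 1 b_expr trig_env_ok) as [A B]; [simpl; repeat split; lia|].
  split; [apply rr_mn; auto|].
  assert (H : forall t, compile trig_env 1 b_expr ([] ++ [t]) [cos (t * t)]).
  { intros t. apply (B [t]); auto. simpl. split; auto. apply Rle_0_sqr. }
  set (a := sqrt (PI / 2)).
  assert (Ha : 0 < a) by (apply sqrt_lt_R0; pose proof PI_RGT_0; lra).
  assert (Ha2 : a * a = PI / 2) by (apply sqrt_sqrt; pose proof PI_RGT_0; lra).
  assert (NZ : forall t, t * t < PI / 2 -> cos (t * t) <> 0).
  { intros t Ht. apply Rgt_not_eq, cos_gt_0; [|auto]. pose proof (Rle_0_sqr t). unfold Rsqr in *. lra. }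
  pose proof (MN_two_sided 0 _ [] (fun t => cos (t * t)) eq_refl (RRec_is_fun _ _ _ A) H a (-a)
    ltac:(lra) ltac:(cbv beta; rewrite Ha2; apply cos_PI2) ltac:(intros t Ht; apply NZ; nra)
    ltac:(lra) ltac:(cbv beta; replace (-a * -a) with (a * a) by ring; rewrite Ha2; apply cos_PI2)
    ltac:(intros t Ht; apply NZ; nra)) as M.
  destruct (Rlt_dec a (- - a)); [lra|]. exact M.
Qed.

Definition full_env : env := mkenv sin_fn cos_fn sig_fn inv_fn sin cos sig_val (fun x => / x) b_fn b_val.

Lemma full_env_ok : env_ok full_env.
Proof. pose proof trig_env_ok as H. unfold env_ok in *; simpl in *. intuition; apply b_fn_ok. Qed.

Lemma b_val_pi : 2 * (b_val * b_val) = PI.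
Proof. unfold b_val. replace (- sqrt (PI / 2) * - sqrt (PI / 2)) with (sqrt (PI / 2) * sqrt (PI / 2)) by ring.
  rewrite sqrt_sqrt; [field| pose proof PI_RGT_0; lra]. Qed.


Lemma cos_shift j x : cos (2 * PI * INR j + x) = cos x.
Proof. rewrite <- (cos_period x j). f_equal; ring. Qed.
Lemma sin_shift j x : sin (2 * PI * INR j + x) = sin x.
Proof. rewrite <- (sin_period x j). f_equal; ring. Qed.

Lemma sin_nonneg_phaseA j t : 2 * PI * INR j <= t <= 2 * PI * INR j + PI -> 0 <= sin t.
Proof. intros H. replace t with (2 * PI * INR j + (t - 2 * PI * INR j)) by ring.
  rewrite sin_shift. apply sin_ge_0; lra. Qed.
Lemma sin_neg_phaseB j t : 2 * PI * INR j + PI < t < 2 * PI * INR j + 2 * PI -> sin t < 0.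
Proof. intros H. replace t with (2 * PI * INR j + (t - 2 * PI * INR j)) by ring.
  rewrite sin_shift. apply sin_lt_0; lra. Qed.
Lemma cos_lt_1_phaseB j t : 2 * PI * INR j + PI <= t < 2 * PI * INR j + 2 * PI -> cos t < 1.
Proof. intros H. replace t with (2 * PI * INR j + (t - 2 * PI * INR j)) by ring.
  rewrite cos_shift. rewrite <- cos_2PI. pose proof PI_RGT_0. apply cos_increasing_1; lra. Qed.
Lemma cos_incr_phaseB j t x : 2 * PI * INR j + PI <= t <= x -> x < 2 * PI * INR j + 2 * PI -> cos t <= cos x.
Proof. intros H1 H2. replace t with (2 * PI * INR j + (t - 2 * PI * INR j)) by ring.
  replace x with (2 * PI * INR j + (x - 2 * PI * INR j)) by ring.
  rewrite !cos_shift. pose proof PI_RGT_0. destruct (Req_dec t x) as [->|]; [lra|].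
  left. apply cos_increasing_1; lra. Qed.
Lemma cos_period_start j : cos (2 * PI * INR j) = 1.
Proof. replace (2 * PI * INR j) with (2 * PI * INR j + 0) by ring. rewrite cos_shift; apply cos_0. Qed.
Lemma cos_period_mid j : cos (2 * PI * INR j + PI) = -1.
Proof. rewrite cos_shift; apply cos_PI. Qed.
Lemma sin_period_start j : sin (2 * PI * INR j) = 0.
Proof. replace (2 * PI * INR j) with (2 * PI * INR j + 0) by ring. rewrite sin_shift; apply sin_0. Qed.
Lemma sin_period_mid j : sin (2 * PI * INR j + PI) = 0.
Proof. rewrite sin_shift; apply sin_PI. Qed.

Definition period_index (t : R) : nat := Z.to_nat (Int_part (t / (2 * PI))).

Lemma period_index_eq j t : 2 * PI * INR j <= t < 2 * PI * INR j + 2 * PI -> period_index t = j.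
Proof. intros H. unfold period_index. pose proof PI_RGT_0.
  assert (E : Z.of_nat j = Int_part (t / (2 * PI))).
  { apply Int_part_spec. rewrite <- INR_IZR_INZ. split.
    - apply (Rmult_lt_reg_r (2 * PI)); [lra|]. unfold Rdiv.
      rewrite Rmult_minus_distr_r, Rmult_assoc, Rinv_l, Rmult_1_r by lra. lra.
    - apply (Rmult_le_reg_r (2 * PI)); [lra|]. unfold Rdiv.
      rewrite Rmult_assoc, Rinv_l, Rmult_1_r by lra. lra. }
  rewrite <- E. apply Nat2Z.id. Qed.

Lemma period_index_spec t : 0 <= t -> 2 * PI * INR (period_index t) <= t < 2 * PI * INR (period_index t) + 2 * PI.
Proof. intros Ht. pose proof PI_RGT_0. unfold period_index.
  set (r := t / (2 * PI)). assert (Hr : 0 <= r) by (unfold r; apply Rmult_le_pos; [lra| left; apply Rinv_0_lt_compat; lra]).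
  destruct (base_Int_part r) as [B1 B2].
  assert (Z0 : (0 <= Int_part r)%Z).
  { destruct (Z_le_gt_dec 0 (Int_part r)); auto. apply Z.gt_lt, Z.lt_le_pred in g. simpl in g.
    apply IZR_le in g. lra. }
  rewrite INR_IZR_INZ, Z2Nat.id by auto.
  assert (Et : t = r * (2 * PI)) by (unfold r; field; lra). rewrite Et. split; nra. Qed.

Lemma INR2j j : INR (2 * j) * PI = 2 * PI * INR j.
Proof. rewrite mult_INR; simpl; ring. Qed.
Lemma INR2j1 j : INR (S (2 * j)) * PI = 2 * PI * INR j + PI.
Proof. rewrite S_INR, mult_INR; simpl; ring. Qed.
Lemma INR2j2 j : INR (S (S (2 * j))) * PI = 2 * PI * INR j + 2 * PI.
Proof. rewrite !S_INR, mult_INR; simpl; ring. Qed.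

Lemma even_odd p : exists j, p = (2 * j)%nat \/ p = S (2 * j).
Proof. induction p as [|p [j [->| ->]]]; [exists 0%nat; left; auto| exists j; right; auto| exists (S j); left; lia]. Qed.

Lemma split_idx m i : (i < m + m)%nat -> (i < m)%nat \/ exists i', i = (m + i')%nat /\ (i' < m)%nat.
Proof. intros H. destruct (Nat.lt_ge_cases i m); [left; auto| right; exists (i - m)%nat; split; lia]. Qed.

Lemma rate_ratio_bound s c c1 E : c <= c1 < 1 -> Rabs s <= 1 ->
  Rabs (s * / (1 - c) * E) <= / (1 - c1) * Rabs E.
Proof. intros Hc Hs.
  assert (P : 0 < / (1 - c)) by (apply Rinv_0_lt_compat; lra).
  assert (Le : / (1 - c) <= / (1 - c1)) by (apply Rinv_le_contravar; lra).
  pose proof (Rabs_pos E).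
  rewrite !Rabs_mult, (Rabs_pos_eq (/ (1 - c))) by lra.
  apply Rmult_le_compat_r; auto.
  replace (/ (1 - c1)) with (1 * / (1 - c1)) by ring.
  apply Rmult_le_compat; auto; [apply Rabs_pos| lra].
Qed.

(* The time pi (2k - 1) = 2 b^2 (2k - 1) is computed from k, and the result
   is the second half Y2 of the state. *)
Definition time_e (m : nat) : expr :=
  Mul (Mul (Add One One) (Mul Bconst Bconst)) (Add (Mul (Add One One) (Var m)) MinusOne).
Definition time_fn (m : nat) : PF := compile_vec full_env (S m) (map Var (seq 0 m) ++ [time_e m]).
Definition second_half (m : nat) : PF :=
  compile_vec full_env (m + m) (map (fun i => Var (m + i)) (seq 0 m)).

Lemma time_fn_ok m : RRec (S m) (S m) (time_fn m) /\
  forall v t, length v = m -> time_fn m (v ++ [t]) (v ++ [PI * (2 * t - 1)]).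
Proof.
  assert (W : forall e, In e (map Var (seq 0 m) ++ [time_e m]) -> wf_expr (S m) e).
  { intros e H. apply in_app_or in H. destruct H as [H|[<-|[]]].
    - apply in_map_seq in H. destruct H as (i & Hi & ->). simpl; lia.
    - simpl. repeat split; lia. }
  destruct (compile_vec_ok full_env (S m) _ full_env_ok W) as [A B].
  rewrite length_app, length_map, length_seq in A. simpl in A. replace (m + 1)%nat with (S m) in A by lia.
  split; auto. intros v t Hv.
  replace (v ++ [PI * (2 * t - 1)]) with (map (fun e => eval full_env e (v ++ [t])) (map Var (seq 0 m) ++ [time_e m])).
  - apply B; [rewrite len_app1; auto|]. intros e H. apply in_app_or in H.
    destruct H as [H|[<-|[]]]; [apply in_map_seq in H; destruct H as (i & _ & ->)|]; simpl; auto.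
  - rewrite map_app, map_map. simpl. f_equal.
    + apply nth_ext with 0 0; [rewrite length_map, length_seq; auto|].
      intros n Hn. rewrite length_map, length_seq in Hn.
      rewrite (nth_map_d _ _ 0%nat) by (rewrite length_seq; auto). rewrite seq_nth by auto. simpl.
      apply app_nth1; lia.
    + f_equal. rewrite <- Hv, nth_app_len. rewrite <- b_val_pi. simpl. ring.
Qed.

Lemma second_half_ok m : RRec (m + m) m (second_half m) /\ forall Yy, length Yy = (m + m)%nat ->
  second_half m Yy (map (fun i => nth (m + i) Yy 0) (seq 0 m)).
Proof.
  assert (W : forall e, In e (map (fun i => Var (m + i)) (seq 0 m)) -> wf_expr (m + m) e).
  { intros e H. apply in_map_seq in H. destruct H as (i & Hi & ->). simpl; lia. }
  destruct (compile_vec_ok full_env (m + m) _ full_env_ok W) as [A B].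
  rewrite length_map, length_seq in A. split; auto. intros Yy HY.
  replace (map (fun i => nth (m + i) Yy 0) (seq 0 m)) with
    (map (fun e => eval full_env e Yy) (map (fun i => Var (m + i)) (seq 0 m))).
  - apply B; auto. intros e H. apply in_map_seq in H. destruct H as (i & _ & ->). simpl; auto.
  - rewrite map_map. reflexivity.
Qed.


(* Its right-hand side reads the input
   u = v ++ t :: Y1 ++ Y2 (length m + 1 + 2m) extended by fp = f(P), where
   the evaluation point is P = theta Y1 + (1 - theta) Y2 and
   theta = [sin t >= 0] (index of t is m, of Y1_i is m+1+i, of Y2_i is
   m+1+(m+i), of fp_i is m+1+(m+m)+i):
     Y1_i' = (1 - theta) sin t (Y1_i - Y2_i) / (1 - cos t),
     Y2_i' = theta sin t (fp_i - Y1_i) / 2. *)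

Definition S_ (m : nat) : expr := Sin (Var m).
Definition C_ (m : nat) : expr := Cos (Var m).
Definition theta_e (m : nat) : expr :=
  Mul (Inv (Add One One)) (Add One (Mul MinusOne (Add (Sig (Mul MinusOne (S_ m))) (Mul MinusOne (S_ m))))).
Definition co_theta_e (m : nat) : expr := Add One (Mul MinusOne (theta_e m)).
Definition rhs_lo_e (m i : nat) : expr :=
  Mul (co_theta_e m) (Mul (S_ m) (Mul (Add (Var (m+1+i)) (Mul MinusOne (Var (m+1+(m+i)))))
   (Inv (Add One (Mul MinusOne (C_ m)))))).
Definition rhs_hi_e (m i : nat) : expr :=
  Mul (theta_e m) (Mul (S_ m) (Mul (Add (Var (m+1+(m+m)+i)) (Mul MinusOne (Var (m+1+i))))
   (Inv (Add One One)))).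
Definition point_e (m i : nat) : expr :=
  Add (Mul (theta_e m) (Var (m+1+i))) (Mul (co_theta_e m) (Var (m+1+(m+i)))).
Definition rhs_exprs (m : nat) : list expr := map (rhs_lo_e m) (seq 0 m) ++ map (rhs_hi_e m) (seq 0 m).
Definition point_exprs (m : nat) : list expr := map (point_e m) (seq 0 m).
Definition init_exprs (m : nat) : list expr := map Var (seq 0 m) ++ map Var (seq 0 m).

Definition theta (s : R) : R := / (1 + 1) * (1 + -1 * (sig_val (-1 * s) + -1 * s)).
Lemma theta_nonneg s : 0 <= s -> theta s = 1.
Proof. intros H. unfold theta, sig_val. destruct (Rlt_dec 0 (-1 * s)); [lra|]. field. Qed.
Lemma theta_neg s : s < 0 -> theta s = 0.
Proof. intros H. unfold theta, sig_val. destruct (Rlt_dec 0 (-1 * s)); [|lra]. field. Qed.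

Lemma eval_rhs_lo m i z : eval full_env (rhs_lo_e m i) z =
  (1 + -1 * theta (sin (nth m z 0))) * (sin (nth m z 0) *
    ((nth (m+1+i) z 0 + -1 * nth (m+1+(m+i)) z 0) * / (1 + -1 * cos (nth m z 0)))).
Proof. reflexivity. Qed.
Lemma eval_rhs_hi m i z : eval full_env (rhs_hi_e m i) z =
  theta (sin (nth m z 0)) * (sin (nth m z 0) *
    ((nth (m+1+(m+m)+i) z 0 + -1 * nth (m+1+i) z 0) * / (1 + 1))).
Proof. reflexivity. Qed.
Lemma eval_point m i z : eval full_env (point_e m i) z =
  theta (sin (nth m z 0)) * nth (m+1+i) z 0 + (1 + -1 * theta (sin (nth m z 0))) * nth (m+1+(m+i)) z 0.
Proof. reflexivity. Qed.

Lemma rhs_exprs_len m : length (rhs_exprs m) = (m + m)%nat.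
Proof. unfold rhs_exprs. rewrite length_app, !length_map, length_seq; auto. Qed.
Lemma point_exprs_len m : length (point_exprs m) = m.
Proof. unfold point_exprs. rewrite length_map, length_seq; auto. Qed.
Lemma init_exprs_len m : length (init_exprs m) = (m + m)%nat.
Proof. unfold init_exprs. rewrite length_app, length_map, length_seq; auto. Qed.

Lemma rhs_exprs_wf m : forall e, In e (rhs_exprs m) -> wf_expr (m + 1 + (m + m) + m) e.
Proof. intros e H. unfold rhs_exprs in H. apply in_app_or in H.
  destruct H as [H|H]; apply in_map_seq in H; destruct H as (i & Hi & ->); simpl; repeat split; lia. Qed.
Lemma point_exprs_wf m : forall e, In e (point_exprs m) -> wf_expr (m + 1 + (m + m)) e.
Proof. intros e H. apply in_map_seq in H; destruct H as (i & Hi & ->); simpl; repeat split; lia. Qed.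
Lemma init_exprs_wf m : forall e, In e (init_exprs m) -> wf_expr m e.
Proof. intros e H. apply in_app_or in H.
  destruct H as [H|H]; apply in_map_seq in H; destruct H as (i & Hi & ->); simpl; lia. Qed.

(* sin and cos are only applied to the time, which is nonnegative. *)
Lemma rhs_exprs_defined m z : 0 <= nth m z 0 -> forall e, In e (rhs_exprs m) -> defined_at full_env e z.
Proof. intros Hz e H. unfold rhs_exprs in H. apply in_app_or in H.
  destruct H as [H|H]; apply in_map_seq in H; destruct H as (i & Hi & ->); simpl; tauto. Qed.
Lemma point_exprs_defined m z : 0 <= nth m z 0 -> forall e, In e (point_exprs m) -> defined_at full_env e z.
Proof. intros Hz e H. apply in_map_seq in H; destruct H as (i & Hi & ->); simpl; tauto. Qed.
Lemma init_exprs_defined m z : forall e, In e (init_exprs m) -> defined_at full_env e z.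
Proof. intros e H. apply in_app_or in H.
  destruct H as [H|H]; apply in_map_seq in H; destruct H as (i & _ & ->); simpl; auto. Qed.

Section Iteration.
Variable m : nat.
Variable f : PF.
Hypothesis Hm : (1 <= m)%nat.
Hypothesis Hf : RRec m m f.

Notation rhs_arity := (m + 1 + (m + m))%nat.

(* A chosen value of f, to describe the right-hand side as a function. *)
Definition fsel (x : list R) : list R := epsilon (inhabits []) (fun w => f x w).
Lemma fsel_spec x w : f x w -> f x (fsel x) /\ w = fsel x.
Proof. intros H. assert (H' : f x (fsel x)) by (apply (epsilon_spec (inhabits []) (fun w => f x w)); eauto).
  split; auto. apply (proj2 (RRec_is_fun _ _ _ Hf) _ _ _ H H'). Qed.

(* rhs_fn = rhs_outer o (id, f o point_fn); flow_fn = PR(init, rhs_fn) with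
   initial value (v, v). *)
Definition point_fn : PF := compile_vec full_env rhs_arity (point_exprs m).
Definition rhs_outer : PF := compile_vec full_env (rhs_arity + m) (rhs_exprs m).
Definition rhs_inner : PF := juxt rhs_arity (rhs_arity + m) (fun j => if Nat.ltb j rhs_arity then proj_fn rhs_arity j
   else Defs.comp (proj_fn m (j - rhs_arity)) (Defs.comp f point_fn)).
Definition rhs_fn : PF := Defs.comp rhs_outer rhs_inner.
Definition init_fn : PF := compile_vec full_env m (init_exprs m).
Definition flow_fn : PF := PRop m (m + m) init_fn rhs_fn.

Definition point_val (u : list R) : list R := map (fun e => eval full_env e u) (point_exprs m).
Definition rhs_val (u : list R) : list R :=
  map (fun e => eval full_env e (u ++ fsel (point_val u))) (rhs_exprs m).

Lemma point_fn_ok : RRec rhs_arity m point_fn /\ forall u, length u = rhs_arity -> 0 <= nth m u 0 -> point_fn u (point_val u).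
Proof. destruct (compile_vec_ok full_env rhs_arity (point_exprs m) full_env_ok (point_exprs_wf m)) as [A B].
  rewrite point_exprs_len in A. split; auto. intros u Hu Hz. apply B; auto. apply point_exprs_defined; auto. Qed.

Lemma rhs_outer_ok : RRec (rhs_arity + m) (m + m) rhs_outer /\ forall z, length z = (rhs_arity + m)%nat -> 0 <= nth m z 0 ->
  rhs_outer z (map (fun e => eval full_env e z) (rhs_exprs m)).
Proof. destruct (compile_vec_ok full_env (rhs_arity + m) (rhs_exprs m) full_env_ok (rhs_exprs_wf m)) as [A B].
  rewrite rhs_exprs_len in A. split; auto. intros z Hz H0. apply B; auto. apply rhs_exprs_defined; auto. Qed.

Lemma rhs_inner_rr : RRec rhs_arity (rhs_arity + m) rhs_inner.
Proof. apply rr_juxt. intros j Hj. destruct (Nat.ltb_spec j rhs_arity).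
  - apply proj_fn_ok; auto.
  - eapply rr_comp; [apply proj_fn_ok; lia|]. eapply rr_comp; [exact Hf| apply point_fn_ok]. Qed.

Lemma rhs_fn_rr : RRec rhs_arity (m + m) rhs_fn.
Proof. eapply rr_comp; [apply rhs_outer_ok| apply rhs_inner_rr]. Qed.

Lemma init_fn_ok : RRec m (m + m) init_fn /\ forall v, length v = m -> init_fn v (v ++ v).
Proof. destruct (compile_vec_ok full_env m (init_exprs m) full_env_ok (init_exprs_wf m)) as [A B].
  rewrite init_exprs_len in A. split; auto. intros v Hv.
  replace (v ++ v) with (map (fun e => eval full_env e v) (init_exprs m)).
  - apply B; auto. apply init_exprs_defined.
  - unfold init_exprs. rewrite map_app, map_map. simpl. rewrite <- Hv, map_nth_seq0; auto.
Qed.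

Lemma flow_fn_rr : RRec (S m) (m + m) flow_fn.
Proof. apply rr_pr; [apply init_fn_ok| apply rhs_fn_rr]. Qed.

Lemma rhs_fn_spec u : length u = rhs_arity -> 0 <= nth m u 0 -> f (point_val u) (fsel (point_val u)) ->
  rhs_fn u (rhs_val u).
Proof. intros Hu H0 Hf1. set (fp := fsel (point_val u)).
  assert (Lf : length fp = m) by (apply (proj1 (RRec_is_fun _ _ _ Hf) _ _ Hf1)).
  exists (u ++ fp). split.
  - unfold rhs_inner, juxt. split; [auto|]. split; [rewrite length_app; lia|]. intros j Hj.
    destruct (Nat.ltb_spec j rhs_arity).
    + rewrite app_nth1 by lia. apply proj_fn_ok; auto.
    + exists fp. split.
      * exists (point_val u). split; [apply point_fn_ok; auto| auto].
      * rewrite app_nth2 by lia. rewrite Hu. apply proj_fn_ok; [lia|auto].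
  - apply rhs_outer_ok; [rewrite length_app; lia|]. rewrite app_nth1 by lia. auto.
Qed.

Lemma rhs_fn_inv u w : rhs_fn u w -> length u = rhs_arity -> 0 <= nth m u 0 ->
  f (point_val u) (fsel (point_val u)) /\ w = rhs_val u.
Proof. intros (z & HI & HO) Hu H0. pose proof HI as (_ & Lz & Hz).
  specialize (Hz rhs_arity ltac:(lia)). destruct (Nat.ltb_spec rhs_arity rhs_arity); [lia|].
  destruct Hz as (fp & (pv & Hpv & Hfp) & _).
  assert (pv = point_val u) by (apply (proj2 (RRec_is_fun _ _ _ (proj1 point_fn_ok)) u); auto; apply point_fn_ok; auto).
  subst pv. assert (F1 : f (point_val u) (fsel (point_val u))) by (apply (fsel_spec _ _ Hfp)).
  split; auto. apply (proj2 (RRec_is_fun _ _ _ rhs_fn_rr) u); [exists z; split; auto| apply rhs_fn_spec; auto].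
Qed.

Lemma point_val_len u : length (point_val u) = m.
Proof. unfold point_val. rewrite length_map, point_exprs_len; auto. Qed.
Lemma point_val_nth u i : (i < m)%nat -> nth i (point_val u) 0 = eval full_env (point_e m i) u.
Proof. intros Hi. unfold point_val. rewrite (nth_map_d _ _ Zero) by (rewrite point_exprs_len; auto).
  unfold point_exprs. rewrite nth_map_seq_gen; auto. Qed.
Lemma rhs_val_lo u i : (i < m)%nat -> nth i (rhs_val u) 0 = eval full_env (rhs_lo_e m i) (u ++ fsel (point_val u)).
Proof. intros Hi. unfold rhs_val. rewrite (nth_map_d _ _ Zero) by (rewrite rhs_exprs_len; lia).
  unfold rhs_exprs. rewrite app_nth1 by (rewrite length_map, length_seq; auto). rewrite nth_map_seq_gen; auto. Qed.
Lemma rhs_val_hi u i : (i < m)%nat ->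
  nth (m + i)%nat (rhs_val u) 0 = eval full_env (rhs_hi_e m i) (u ++ fsel (point_val u)).
Proof. intros Hi. unfold rhs_val. rewrite (nth_map_d _ _ Zero) by (rewrite rhs_exprs_len; lia).
  unfold rhs_exprs. rewrite app_nth2 by (rewrite length_map, length_seq; lia).
  rewrite length_map, length_seq. replace (m + i - m)%nat with i by lia. rewrite nth_map_seq_gen; auto. Qed.

Definition iterate_fn : PF := Defs.comp (second_half m) (Defs.comp flow_fn (time_fn m)).

Lemma iterate_fn_rr : RRec (S m) m iterate_fn.
Proof. eapply rr_comp; [apply second_half_ok|]. eapply rr_comp; [apply flow_fn_rr| apply time_fn_ok]. Qed.

Section Orbit.
Variable v : list R.
Variable k : nat.
Variable a : nat -> list R.
Hypothesis Hv : length v = m.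
Hypothesis Hk : (1 <= k)%nat.
Hypothesis Ha0 : a 0%nat = v.
Hypothesis Haf : forall j, (j < k)%nat -> f (a j) (a (S j)).
Hypothesis Hal : forall j, (j <= k)%nat -> length (a j) = m.

(* With lam t = (1 - cos t) / 2, which runs from 0
   to 1 on [2 pi j, 2 pi j + pi] and back on the next half period:
   phase A of period j:  (a_j, a_j + lam t (a_{j+1} - a_j)),
   phase B of period j:  (a_{j+1} + lam t (a_j - a_{j+1}), a_{j+1}). *)
Definition lerp (p q : list R) (l : R) : list R :=
  map (fun i => nth i p 0 + l * (nth i q 0 - nth i p 0)) (seq 0 m).
Definition lam (t : R) : R := (1 - cos t) / 2.
Definition schedule (t : R) : list R :=
  if Rle_dec (t - 2 * PI * INR (period_index t)) PI
  then a (period_index t) ++ lerp (a (period_index t)) (a (S (period_index t))) (lam t)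
  else lerp (a (S (period_index t))) (a (period_index t)) (lam t) ++ a (S (period_index t)).

(* At the end of phase A of period k - 1, Y2 = a_k. *)
Definition final_time : R := PI * (2 * INR k - 1).

Lemma final_time_ge_PI : PI <= final_time.
Proof. unfold final_time. pose proof PI_RGT_0. apply le_INR in Hk. simpl in Hk. nra. Qed.

Lemma phaseA_in_range j t : (j < k)%nat -> 2 * PI * INR j <= t <= 2 * PI * INR j + PI ->
  0 <= t <= final_time.
Proof. intros Hj Ht. pose proof PI_RGT_0. pose proof (pos_INR j).
  assert (Hj' : INR (S j) <= INR k) by (apply le_INR; lia). rewrite S_INR in Hj'.
  unfold final_time. nra. Qed.

Lemma phaseB_in_range j t : (S j < k)%nat -> 2 * PI * INR j + PI <= t <= 2 * PI * INR j + 2 * PI ->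
  0 <= t <= final_time.
Proof. intros Hj Ht. pose proof PI_RGT_0. pose proof (pos_INR j).
  assert (Hj' : INR (S (S j)) <= INR k) by (apply le_INR; lia). rewrite !S_INR in Hj'.
  unfold final_time. nra. Qed.

Lemma lerp_len p q l : length (lerp p q l) = m.
Proof. unfold lerp. rewrite length_map, length_seq; auto. Qed.
Lemma lerp_nth p q l i : (i < m)%nat -> nth i (lerp p q l) 0 = nth i p 0 + l * (nth i q 0 - nth i p 0).
Proof. intros Hi. unfold lerp. rewrite (nth_map_d _ _ 0%nat) by (rewrite length_seq; auto).
  rewrite seq_nth; auto. Qed.

Lemma nth_lo (p q : list R) i : length p = m -> (i < m)%nat -> nth i (p ++ q) 0 = nth i p 0.
Proof. intros. apply app_nth1; lia. Qed.
Lemma nth_hi (p q : list R) i : length p = m -> nth (m + i)%nat (p ++ q) 0 = nth i q 0.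
Proof. intros. rewrite app_nth2 by lia. f_equal; lia. Qed.

Lemma schedule_phaseA j t i : (j <= k)%nat -> 2 * PI * INR j <= t <= 2 * PI * INR j + PI -> (i < m)%nat ->
  nth i (schedule t) 0 = nth i (a j) 0 /\
  nth (m + i)%nat (schedule t) 0 = nth i (a j) 0 + lam t * (nth i (a (S j)) 0 - nth i (a j) 0).
Proof. intros Hj Ht Hi. pose proof PI_RGT_0.
  assert (period_index t = j) by (apply period_index_eq; lra). unfold schedule. rewrite H0.
  destruct (Rle_dec (t - 2 * PI * INR j) PI); [|lra].
  rewrite (nth_lo _ _ i (Hal j Hj) Hi), (nth_hi _ _ i (Hal j Hj)), lerp_nth by auto. auto. Qed.

(* On the closed half period; the endpoints agree with the neighbouring phases. *)
Lemma schedule_phaseB j t i : (S j <= k)%nat -> 2 * PI * INR j + PI <= t <= 2 * PI * INR j + 2 * PI ->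
  (i < m)%nat ->
  nth i (schedule t) 0 = nth i (a (S j)) 0 + lam t * (nth i (a j) 0 - nth i (a (S j)) 0) /\
  nth (m + i)%nat (schedule t) 0 = nth i (a (S j)) 0.
Proof. intros Hj Ht Hi. pose proof PI_RGT_0.
  destruct (Req_dec t (2 * PI * INR j + PI)) as [E|E].
  - destruct (schedule_phaseA j t i) as [A1 A2]; try lia; try lra. rewrite A1, A2.
    unfold lam. rewrite E, cos_period_mid. split; field.
  - destruct (Req_dec t (2 * PI * INR j + 2 * PI)) as [E2|E2].
    + destruct (schedule_phaseA (S j) t i) as [A1 A2]; try lia; [rewrite S_INR; lra|]. rewrite A1, A2.
      unfold lam. replace t with (2 * PI * INR (S j)) by (rewrite S_INR; lra). rewrite cos_period_start.
      split; field.
    + assert (period_index t = j) by (apply period_index_eq; lra). unfold schedule. rewrite H0.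
      destruct (Rle_dec (t - 2 * PI * INR j) PI); [lra|].
      rewrite (nth_lo _ _ i (lerp_len _ _ _) Hi), (nth_hi _ _ i (lerp_len _ _ _)), lerp_nth by auto. split; auto.
Qed.

Lemma period_index_lt t : 0 <= t <= final_time -> (period_index t < k)%nat.
Proof. intros Ht. pose proof (period_index_spec t (proj1 Ht)). pose proof PI_RGT_0. unfold final_time in Ht.
  apply INR_lt. assert (INR (period_index t) * PI < INR k * PI) by nra. nra. Qed.

Lemma phase_cover t : 0 <= t <= final_time ->
  (exists j, (j < k)%nat /\ 2 * PI * INR j <= t <= 2 * PI * INR j + PI) \/
  (exists j, (S j < k)%nat /\ 2 * PI * INR j + PI < t < 2 * PI * INR j + 2 * PI).
Proof. intros Ht. pose proof (period_index_spec t (proj1 Ht)). pose proof (period_index_lt t Ht).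
  pose proof PI_RGT_0.
  destruct (Rle_dec (t - 2 * PI * INR (period_index t)) PI).
  - left. exists (period_index t). split; auto; lra.
  - right. exists (period_index t). split; [|lra]. unfold final_time in Ht. apply INR_lt. rewrite S_INR.
    assert ((INR (period_index t) + 1) * PI < INR k * PI) by nra. nra.
Qed.

Lemma schedule_len t : 0 <= t <= final_time -> length (schedule t) = (m + m)%nat.
Proof. intros Ht. pose proof (period_index_lt t Ht).
  unfold schedule. destruct (Rle_dec _ _); rewrite length_app, lerp_len, Hal; auto; lia. Qed.

Lemma schedule_at_0 i : (i < m + m)%nat -> nth i (schedule 0) 0 = nth i (v ++ v) 0.
Proof. intros Hi. pose proof PI_RGT_0.
  destruct (split_idx m i Hi) as [Hi'|(i' & -> & Hi')].
  - rewrite (proj1 (schedule_phaseA 0 0 i ltac:(lia) ltac:(simpl; lra) Hi')), Ha0.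
    rewrite app_nth1; auto; lia.
  - rewrite (proj2 (schedule_phaseA 0 0 i' ltac:(lia) ltac:(simpl; lra) Hi')), Ha0.
    unfold lam. rewrite cos_0. replace (m + i')%nat with (length v + i')%nat by (rewrite Hv; auto).
    rewrite app_nth2_plus. field.
Qed.

Lemma schedule_final i : (i < m)%nat -> nth (m + i)%nat (schedule final_time) 0 = nth i (a k) 0.
Proof. intros Hi. pose proof PI_RGT_0.
  assert (ET : final_time = 2 * PI * INR (k - 1) + PI)
    by (unfold final_time; rewrite minus_INR by lia; simpl; ring).
  destruct (schedule_phaseA (k - 1) final_time i ltac:(lia) ltac:(lra) Hi) as [_ E].
  rewrite E. replace (S (k - 1)) with k by lia. unfold lam. rewrite ET, cos_period_mid. field.
Qed.

Lemma acc_tau t Yy : nth m (v ++ t :: Yy) 0 = t.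
Proof. rewrite <- Hv. apply nth_app_len. Qed.
Lemma acc_tau2 t Yy fp : nth m ((v ++ t :: Yy) ++ fp) 0 = t.
Proof. rewrite app_nth1 by (rewrite length_app; simpl; lia). apply acc_tau. Qed.
Lemma acc_Y t Yy j : (j < length Yy)%nat -> nth (m + 1 + j)%nat (v ++ t :: Yy) 0 = nth j Yy 0.
Proof. intros H. rewrite app_nth2 by lia. rewrite Hv. replace (m + 1 + j - m)%nat with (S j) by lia. auto. Qed.
Lemma acc_Y2 t Yy fp j : (j < length Yy)%nat -> nth (m + 1 + j)%nat ((v ++ t :: Yy) ++ fp) 0 = nth j Yy 0.
Proof. intros H. rewrite app_nth1 by (rewrite length_app; simpl; lia). apply acc_Y; auto. Qed.
Lemma acc_fp t Yy fp j : length Yy = (m + m)%nat ->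
  nth (m + 1 + (m + m) + j)%nat ((v ++ t :: Yy) ++ fp) 0 = nth j fp 0.
Proof. intros H. rewrite app_nth2 by (rewrite length_app; simpl; lia). rewrite length_app; simpl.
  f_equal. lia. Qed.

Lemma rhs_phaseA j t Yy : (j < k)%nat -> 0 <= sin t -> length Yy = (m + m)%nat ->
  (forall i, (i < m)%nat -> nth i Yy 0 = nth i (a j) 0) ->
  let u := v ++ t :: Yy in
  f (point_val u) (fsel (point_val u)) /\
  (forall i, (i < m)%nat -> nth (m + i)%nat (rhs_val u) 0 = sin t * ((nth i (a (S j)) 0 - nth i (a j) 0) / 2)).
Proof. intros Hj Hs HL HY u.
  assert (Th : theta (sin t) = 1) by (apply theta_nonneg; auto).
  assert (P : point_val u = a j).
  { apply nth_ext with 0 0; [rewrite point_val_len, Hal; auto; lia|]. intros i Hi. rewrite point_val_len in Hi.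
    rewrite point_val_nth, eval_point by auto. unfold u. rewrite acc_tau, !acc_Y by lia. rewrite Th, HY by auto. ring. }
  assert (F1 : f (point_val u) (fsel (point_val u))) by (rewrite P; apply (fsel_spec _ _ (Haf j Hj))).
  assert (F2 : fsel (point_val u) = a (S j)) by (rewrite P; symmetry; apply (fsel_spec _ _ (Haf j Hj))).
  split; auto. intros i Hi. rewrite rhs_val_hi, eval_rhs_hi, F2 by auto. unfold u.
  rewrite acc_tau2, Th, acc_fp, acc_Y2, HY by (auto; lia). field.
Qed.

Lemma rhs_phaseB j t Yy : (S j < k)%nat -> sin t < 0 -> length Yy = (m + m)%nat ->
  (forall i, (i < m)%nat -> nth (m + i)%nat Yy 0 = nth i (a (S j)) 0) ->
  let u := v ++ t :: Yy in
  f (point_val u) (fsel (point_val u)) /\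
  (forall i, (i < m)%nat -> nth i (rhs_val u) 0 = sin t * ((nth i Yy 0 - nth i (a (S j)) 0) * / (1 - cos t))).
Proof. intros Hj Hs HL HY u.
  assert (Th : theta (sin t) = 0) by (apply theta_neg; auto).
  assert (P : point_val u = a (S j)).
  { apply nth_ext with 0 0; [rewrite point_val_len, Hal; auto; lia|]. intros i Hi. rewrite point_val_len in Hi.
    rewrite point_val_nth, eval_point by auto. unfold u. rewrite acc_tau, !acc_Y by lia. rewrite Th, HY by auto. ring. }
  assert (F1 : f (point_val u) (fsel (point_val u))) by (rewrite P; apply (fsel_spec _ _ (Haf (S j) Hj))).
  split; auto. intros i Hi. rewrite rhs_val_lo, eval_rhs_lo by auto. unfold u.
  rewrite acc_tau2, Th, !acc_Y2 by lia. rewrite HY by auto.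
  replace (1 + -1 * cos t) with (1 - cos t) by ring. ring.
Qed.

Lemma rhs_lo_zero_phaseA t Yy i : 0 <= sin t -> (i < m)%nat -> nth i (rhs_val (v ++ t :: Yy)) 0 = 0.
Proof. intros Hs Hi. rewrite (rhs_val_lo _ i Hi), eval_rhs_lo, acc_tau2, theta_nonneg by auto. ring. Qed.
Lemma rhs_hi_zero_phaseB t Yy i : sin t < 0 -> (i < m)%nat -> nth (m + i)%nat (rhs_val (v ++ t :: Yy)) 0 = 0.
Proof. intros Hs Hi. rewrite (rhs_val_hi _ i Hi), eval_rhs_hi, acc_tau2, theta_neg by auto. ring. Qed.
Lemma rhs_zero_at_sin0 t Yy i : sin t = 0 -> (i < m)%nat ->
  nth i (rhs_val (v ++ t :: Yy)) 0 = 0 /\ nth (m + i)%nat (rhs_val (v ++ t :: Yy)) 0 = 0.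
Proof. intros Hs Hi. rewrite (rhs_val_hi _ i Hi), eval_rhs_hi, (rhs_val_lo _ i Hi), eval_rhs_lo.
  rewrite acc_tau2, Hs. split; ring. Qed.

Definition sched_rate (t : R) : list R := rhs_val (v ++ t :: schedule t).

Definition closed_form (i : nat) (c d : R) : Prop :=
  exists K, forall t, c <= t <= d ->
    nth i (sched_rate t) 0 = K * sin t /\
    nth i (schedule t) 0 = nth i (schedule c) 0 + K * (cos c - cos t).

Lemma closed_form_phaseA j i : (j < k)%nat -> (i < m + m)%nat ->
  closed_form i (2 * PI * INR j) (2 * PI * INR j + PI).
Proof.
  intros Hj Hi. pose proof PI_RGT_0.
  destruct (split_idx m i Hi) as [Hi'|(i' & -> & Hi')].
  - exists 0. intros t Ht. split.
    + unfold sched_rate. rewrite (rhs_lo_zero_phaseA t (schedule t) i (sin_nonneg_phaseA j t Ht) Hi'). ring.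
    + rewrite (proj1 (schedule_phaseA j t i ltac:(lia) Ht Hi')).
      rewrite (proj1 (schedule_phaseA j (2 * PI * INR j) i ltac:(lia) ltac:(lra) Hi')). ring.
  - exists ((nth i' (a (S j)) 0 - nth i' (a j) 0) / 2). intros t Ht.
    assert (HT := phaseA_in_range j t Hj Ht).
    destruct (rhs_phaseA j t (schedule t) Hj (sin_nonneg_phaseA j t Ht) (schedule_len t HT)) as (_ & G2).
    { intros i0 Hi0. apply (schedule_phaseA j t i0 ltac:(lia) Ht Hi0). }
    split.
    + unfold sched_rate. rewrite G2 by auto. field.
    + rewrite (proj2 (schedule_phaseA j t i' ltac:(lia) Ht Hi')).
      rewrite (proj2 (schedule_phaseA j (2 * PI * INR j) i' ltac:(lia) ltac:(lra) Hi')).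
      unfold lam. rewrite cos_period_start. field.
Qed.

Lemma phaseB_cases j t : 2 * PI * INR j + PI <= t <= 2 * PI * INR j + 2 * PI ->
  sin t = 0 \/ (sin t < 0 /\ cos t < 1 /\ 2 * PI * INR j + PI < t < 2 * PI * INR j + 2 * PI).
Proof. intros Ht. destruct (Req_dec t (2 * PI * INR j + PI)) as [E|E]; [left; rewrite E; apply sin_period_mid|].
  destruct (Req_dec t (2 * PI * INR j + 2 * PI)) as [E2|E2].
  - left. rewrite E2. replace (2 * PI * INR j + 2 * PI) with (2 * PI * INR (S j)) by (rewrite S_INR; ring).
    apply sin_period_start.
  - right. split; [apply (sin_neg_phaseB j); lra|]. split; [apply (cos_lt_1_phaseB j); lra| lra].
Qed.

Lemma closed_form_phaseB j i : (S j < k)%nat -> (i < m + m)%nat ->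
  closed_form i (2 * PI * INR j + PI) (2 * PI * INR j + 2 * PI).
Proof.
  intros Hj Hi. pose proof PI_RGT_0.
  destruct (split_idx m i Hi) as [Hi'|(i' & -> & Hi')].
  - exists ((nth i (a j) 0 - nth i (a (S j)) 0) / 2). intros t Ht.
    assert (Yt := proj1 (schedule_phaseB j t i ltac:(lia) Ht Hi')).
    split.
    + unfold sched_rate. destruct (phaseB_cases j t Ht) as [S0|(S1 & C1 & Ht')].
      * rewrite (proj1 (rhs_zero_at_sin0 t (schedule t) i S0 Hi')), S0. ring.
      * destruct (rhs_phaseB j t (schedule t) Hj S1 (schedule_len t (phaseB_in_range j t Hj Ht)))
          as (_ & G1).
        { intros i0 Hi0. apply (schedule_phaseB j t i0 ltac:(lia) Ht Hi0). }
        rewrite G1, Yt by auto. unfold lam. field. lra.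
    + rewrite Yt, (proj1 (schedule_phaseB j (2 * PI * INR j + PI) i ltac:(lia) ltac:(lra) Hi')).
      unfold lam. rewrite cos_period_mid. field.
  - exists 0. intros t Ht. split.
    + unfold sched_rate. destruct (phaseB_cases j t Ht) as [S0|(S1 & C1 & Ht')].
      * rewrite (proj2 (rhs_zero_at_sin0 t (schedule t) i' S0 Hi')). ring.
      * rewrite (rhs_hi_zero_phaseB t (schedule t) i' S1 Hi'). ring.
    + rewrite (proj2 (schedule_phaseB j t i' ltac:(lia) Ht Hi')).
      rewrite (proj2 (schedule_phaseB j (2 * PI * INR j + PI) i' ltac:(lia) ltac:(lra) Hi')). ring.
Qed.

Lemma half_period_bound p t : INR p * PI < t -> t <= final_time -> (p <= 2 * k - 2)%nat.
Proof. intros H1 H2. pose proof PI_RGT_0. unfold final_time in H2.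
  assert (HH : INR p < INR (2 * k - 1)).
  { rewrite minus_INR, mult_INR by lia. simpl. nra. }
  apply INR_lt in HH. lia. Qed.

Lemma closed_form_half_period p i : (p <= 2 * k - 2)%nat -> (i < m + m)%nat ->
  closed_form i (INR p * PI) (INR (S p) * PI).
Proof. intros Hp Hi. destruct (even_odd p) as [j [-> | ->]].
  - rewrite INR2j, INR2j1. apply closed_form_phaseA; auto; lia.
  - rewrite INR2j1, INR2j2. apply closed_form_phaseB; auto; lia.
Qed.

Lemma schedule_integral_eq p : forall t, 0 <= t <= INR p * PI -> t <= final_time ->
  forall i, (i < m + m)%nat ->
  exists pr : Riemann_integrable (fun tau => nth i (sched_rate tau) 0) 0 t,
    nth i (schedule t) 0 = nth i (v ++ v) 0 + RiemannInt pr.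
Proof.
  pose proof PI_RGT_0.
  induction p; intros t Ht HT i Hi.
  - simpl in Ht. assert (t = 0) by lra. subst t.
    exists (RiemannInt_P7 _ 0). rewrite RiemannInt_P9, schedule_at_0 by auto. ring.
  - destruct (Rle_dec t (INR p * PI)) as [Hle|Hgt]; [apply IHp; auto; lra|].
    assert (Hp := half_period_bound p t ltac:(lra) HT).
    assert (Hc : 0 <= INR p * PI) by (pose proof (pos_INR p); nra).
    destruct (IHp (INR p * PI) ltac:(lra) ltac:(lra) i Hi) as [prc Ec].
    destruct (closed_form_half_period p i Hp Hi) as [K HK].
    assert (prct : Riemann_integrable (fun tau => nth i (sched_rate tau) 0) (INR p * PI) t).
    { apply Riemann_integrable_ext with (f := fun x => K * sin x); [|apply RI_sin].
      intros x Hx. rewrite Rmin_left, Rmax_right in Hx by lra. symmetry; apply HK; lra. }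
    exists (RiemannInt_P24 prc prct).
    rewrite <- (RiemannInt_P26 prc prct (RiemannInt_P24 prc prct)).
    rewrite (RInt_ext _ (fun x => K * sin x) _ _ prct (RI_sin K (INR p * PI) t)).
    + rewrite int_sin, (proj2 (HK t ltac:(lra))), Ec. ring.
    + intros x Hx. rewrite Rmin_left, Rmax_right in Hx by lra. apply HK; lra.
Qed.

Definition schedule_h (tau : R) : option (list R) :=
  if Rle_dec 0 tau then if Rle_dec tau final_time then Some (schedule tau) else None else None.

Lemma schedule_h_dom x : dom1 schedule_h x <-> 0 <= x <= final_time.
Proof. unfold dom1, schedule_h.
  destruct (Rle_dec 0 x); [destruct (Rle_dec x final_time)|]; split; intros; try congruence; lra. Qed.

Lemma schedule_h_Some x y : schedule_h x = Some y -> 0 <= x <= final_time /\ y = schedule x.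
Proof. unfold schedule_h. destruct (Rle_dec 0 x); [destruct (Rle_dec x final_time)|]; intros E; try discriminate.
  injection E; auto. Qed.

(* Along the schedule f is always evaluated at a point of the orbit. *)
Lemma f_defined_on_schedule t : 0 <= t <= final_time ->
  f (point_val (v ++ t :: schedule t)) (fsel (point_val (v ++ t :: schedule t))).
Proof. intros Ht. destruct (phase_cover t Ht) as [(j & Hj & Ht')|(j & Hj & Ht')].
  - apply (rhs_phaseA j t (schedule t) Hj (sin_nonneg_phaseA j t Ht') (schedule_len t Ht)).
    intros i0 Hi0. apply (schedule_phaseA j t i0 ltac:(lia) Ht' Hi0).
  - apply (rhs_phaseB j t (schedule t) Hj (sin_neg_phaseB j t Ht') (schedule_len t Ht)).
    intros i0 Hi0. apply (schedule_phaseB j t i0 ltac:(lia) ltac:(lra) Hi0).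
Qed.

Lemma schedule_h_in_H : PR_H m (m + m) init_fn rhs_fn v schedule_h.
Proof.
  pose proof final_time_ge_PI. pose proof PI_RGT_0.
  split; [right; split|split].
  - intros x y z Hx Hy Hz. apply schedule_h_dom in Hx; apply schedule_h_dom in Hy. apply schedule_h_dom; lra.
  - apply schedule_h_dom; lra.
  - intros _; exists (v ++ v); apply (proj2 init_fn_ok); auto.
  - exists sched_rate. split.
    + intros tau y E. apply schedule_h_Some in E. destruct E as [Ht ->]. unfold sched_rate.
      apply rhs_fn_spec; auto.
      * rewrite length_app; simpl. rewrite schedule_len; auto. lia.
      * rewrite acc_tau. lra.
      * apply f_defined_on_schedule; auto.
    + intros t y E. apply schedule_h_Some in E. destruct E as [Ht ->]. split; [apply schedule_len; auto|].
      exists (v ++ v). split; [apply (proj2 init_fn_ok); auto|].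
      intros i Hi. apply (schedule_integral_eq (2 * k - 1)); [split; [lra|] | lra | auto].
      destruct Ht as [_ Ht]. unfold final_time in Ht. rewrite minus_INR, mult_INR by lia. simpl. nra.
Qed.

(* Uniqueness: a member h of H_v defined at t1 agrees with the schedule on
   [0, t1].  We propagate agreement over the half periods. *)
Section Uniqueness.
Variable h : R -> option (list R).
Hypothesis Hh : PR_H m (m + m) init_fn rhs_fn v h.
Variable t1 : R.
Variable y1 : list R.
Hypothesis Ht1 : 0 <= t1 <= final_time.
Hypothesis E1 : h t1 = Some y1.

Notation Y := (sol_val h).

Lemma sol_on x : 0 <= x <= t1 -> h x = Some (Y x).
Proof. intros Hx. exact (PR_H_on_segment _ _ _ _ _ _ _ _ x Hh E1 Hx). Qed.

Lemma sol_rate_exists : exists gm : R -> list R,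
  forall x, 0 <= x <= t1 -> length (Y x) = (m + m)%nat /\
      gm x = rhs_val (v ++ x :: Y x) /\
      forall i, (i < m + m)%nat -> exists pr : Riemann_integrable (fun tau => nth i (gm tau) 0) 0 x,
        nth i (Y x) 0 = nth i (v ++ v) 0 + RiemannInt pr.
Proof.
  destruct (PR_H_data _ _ _ _ _ _ _ _ Hh E1) as (_ & _ & gm & Hg & Heq).
  exists gm. intros x Hx. destruct (Heq _ _ (sol_on x Hx)) as (L & fv & Hfv & Hi).
  assert (fv = v ++ v)
    by (apply (proj2 (RRec_is_fun _ _ _ (proj1 init_fn_ok)) v); auto; apply (proj2 init_fn_ok); auto).
  subst fv. split; auto. split; auto.
  assert (LL : length (v ++ x :: Y x) = (m + 1 + (m + m))%nat) by (rewrite length_app; simpl; rewrite L; lia).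
  assert (NN : 0 <= nth m (v ++ x :: Y x) 0) by (rewrite acc_tau; lra).
  apply (proj2 (rhs_fn_inv _ _ (Hg _ _ (sol_on x Hx)) LL NN)).
Qed.

Section WithRate.
Variable gm : R -> list R.
Hypothesis HG : forall x, 0 <= x <= t1 -> length (Y x) = (m + m)%nat /\
      gm x = rhs_val (v ++ x :: Y x) /\
      forall i, (i < m + m)%nat -> exists pr : Riemann_integrable (fun tau => nth i (gm tau) 0) 0 x,
        nth i (Y x) 0 = nth i (v ++ v) 0 + RiemannInt pr.

Definition agree_at (x : R) : Prop :=
  forall i, (i < m + m)%nat -> nth i (Y x) 0 = nth i (schedule x) 0.

Lemma sol_increment c x i : 0 <= c <= x -> x <= t1 -> (i < m + m)%nat ->
  exists pr : Riemann_integrable (fun tau => nth i (gm tau) 0) c x,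
    nth i (Y x) 0 = nth i (Y c) 0 + RiemannInt pr.
Proof. intros Hc Hx Hi.
  destruct (proj2 (proj2 (HG x ltac:(lra))) i Hi) as [prx Ex].
  destruct (proj2 (proj2 (HG c ltac:(lra))) i Hi) as [prc Ec].
  pose (p1 := RiemannInt_P22 prx Hc). pose (p2 := RiemannInt_P23 prx Hc).
  exists p2. rewrite Ex, Ec, <- (RiemannInt_P26 p1 p2 prx), (RiemannInt_P5 prc p1). ring. Qed.

Lemma agree_by_rates c d x i : 0 <= c -> c < x <= d -> x <= t1 -> (i < m + m)%nat ->
  closed_form i c d -> nth i (Y c) 0 = nth i (schedule c) 0 ->
  (forall tau, c < tau < x -> nth i (gm tau) 0 = nth i (sched_rate tau) 0) ->
  nth i (Y x) 0 = nth i (schedule x) 0.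
Proof. intros Hc Hx Hxt Hi [K HK] Hstart Hrate.
  destruct (sol_increment c x i ltac:(lra) Hxt Hi) as [pr E].
  rewrite E, Hstart, (proj2 (HK x ltac:(lra))).
  rewrite (RiemannInt_P18 pr (RI_sin K c x)); [rewrite int_sin; ring|lra|].
  intros tau Ht. rewrite Hrate by lra. apply HK; lra. Qed.

Lemma sol_Y1_phaseA j x : 2 * PI * INR j <= x <= 2 * PI * INR j + PI -> x <= t1 ->
  agree_at (2 * PI * INR j) -> (j < k)%nat -> forall i, (i < m)%nat -> nth i (Y x) 0 = nth i (a j) 0.
Proof. intros Hx Hxt Hc Hj i Hi. pose proof PI_RGT_0. pose proof (pos_INR j).
  destruct (sol_increment (2 * PI * INR j) x i ltac:(nra) Hxt ltac:(lia)) as [pr E].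
  rewrite E, Hc by lia. rewrite (proj1 (schedule_phaseA j (2 * PI * INR j) i ltac:(lia) ltac:(lra) Hi)).
  rewrite (RInt_ext _ (fun _ => 0) _ _ pr (RiemannInt_P14 (2 * PI * INR j) x 0)).
  - rewrite RInt_const. ring.
  - intros tau Htau. rewrite Rmin_left, Rmax_right in Htau by lra.
    rewrite (proj1 (proj2 (HG tau ltac:(nra)))).
    apply rhs_lo_zero_phaseA; auto. apply (sin_nonneg_phaseA j); lra.
Qed.

Lemma sol_Y2_phaseB j x : 2 * PI * INR j + PI <= x <= 2 * PI * INR j + 2 * PI -> x <= t1 ->
  agree_at (2 * PI * INR j + PI) -> (S j < k)%nat ->
  forall i, (i < m)%nat -> nth (m + i)%nat (Y x) 0 = nth i (a (S j)) 0.
Proof. intros Hx Hxt Hc Hj i Hi. pose proof PI_RGT_0. pose proof (pos_INR j).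
  assert (Hc0 : 0 <= 2 * PI * INR j + PI) by nra.
  destruct (sol_increment (2 * PI * INR j + PI) x (m + i) ltac:(lra) Hxt ltac:(lia)) as [pr E].
  rewrite E, Hc by lia. rewrite (proj2 (schedule_phaseB j (2 * PI * INR j + PI) i ltac:(lia) ltac:(lra) Hi)).
  rewrite (RiemannInt_P18 pr (RiemannInt_P14 (2 * PI * INR j + PI) x 0)); [|lra|].
  - rewrite (RiemannInt_P15 (RiemannInt_P14 (2 * PI * INR j + PI) x 0)). ring.
  - intros tau Htau. rewrite (proj1 (proj2 (HG tau ltac:(lra)))).
    apply rhs_hi_zero_phaseB; auto. apply (sin_neg_phaseB j); lra.
Qed.

(* In phase B, the difference Y1 - schedule1 integrates the difference of
   the rates from the start c of the phase ... *)
Lemma phaseB_diff_integral j c tau i : c = 2 * PI * INR j + PI -> (S j < k)%nat ->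
  c <= tau <= 2 * PI * INR j + 2 * PI -> tau <= t1 -> agree_at c -> (i < m)%nat ->
  exists pr : Riemann_integrable
      (fun x => nth i (gm x) 0 + -1 * nth i (sched_rate x) 0) c tau,
    nth i (Y tau) 0 + -1 * nth i (schedule tau) 0 = RiemannInt pr.
Proof. intros Ec Hj Htau Ht1' Hc Hi. pose proof PI_RGT_0. pose proof (pos_INR j).
  destruct (sol_increment c tau i ltac:(nra) Ht1' ltac:(lia)) as [pr1 Epr1].
  destruct (closed_form_phaseB j i Hj ltac:(lia)) as [K HK]. rewrite <- Ec in HK.
  assert (pr2 : Riemann_integrable (fun x => nth i (sched_rate x) 0) c tau).
  { apply Riemann_integrable_ext with (f := fun x => K * sin x); [|apply RI_sin].
    intros y Hy. rewrite Rmin_left, Rmax_right in Hy by lra. symmetry; apply HK. lra. }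
  exists (RI_lin _ _ _ c tau (-1) (fun _ => eq_refl) pr1 pr2).
  rewrite (RInt_lin _ _ _ _ _ (-1) pr1 pr2 _ (fun _ => eq_refl)).
  rewrite Epr1, Hc, (proj2 (HK tau ltac:(lra))) by lia.
  rewrite (RInt_ext _ (fun x => K * sin x) _ _ pr2 (RI_sin K c tau)).
  - rewrite int_sin. ring.
  - intros y Hy. rewrite Rmin_left, Rmax_right in Hy by lra. apply HK. lra.
Qed.

(* ... and the rate difference is Lipschitz in the difference, with constant
   1 / (1 - cos x1) up to x1 < 2 pi (j+1). *)
Lemma phaseB_rate_diff_bound j c x1 tau i B : c = 2 * PI * INR j + PI -> (S j < k)%nat ->
  c < tau < x1 -> x1 < 2 * PI * INR j + 2 * PI -> x1 <= t1 -> agree_at c -> (i < m)%nat ->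
  (forall i', (i' < m)%nat -> Rabs (nth i' (Y tau) 0 + -1 * nth i' (schedule tau) 0) <= B) ->
  Rabs (nth i (gm tau) 0 + -1 * nth i (sched_rate tau) 0) <= / (1 - cos x1) * B.
Proof. intros Ec Hj Htau Hx1 Hxt Hc Hi HB. pose proof PI_RGT_0. pose proof (pos_INR j).
  assert (Ht' : 2 * PI * INR j + PI < tau < 2 * PI * INR j + 2 * PI) by lra.
  assert (Hs := sin_neg_phaseB j tau Ht').
  assert (HT := phaseB_in_range j tau Hj ltac:(lra)).
  destruct (HG tau ltac:(nra)) as (Lt & G & _). rewrite G. unfold sched_rate.
  destruct (rhs_phaseB j tau (Y tau) Hj Hs Lt) as (_ & G1).
  { intros i' Hi'. rewrite Ec in Hc. apply (sol_Y2_phaseB j tau); auto; lra. }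
  destruct (rhs_phaseB j tau (schedule tau) Hj Hs (schedule_len tau HT)) as (_ & G1').
  { intros i' Hi'. apply (schedule_phaseB j tau i' ltac:(lia) ltac:(lra) Hi'). }
  rewrite G1, G1' by auto.
  assert (Ct : cos tau <= cos x1) by (apply (cos_incr_phaseB j); lra).
  assert (Cx1 : cos x1 < 1) by (apply (cos_lt_1_phaseB j); lra).
  assert (Ctau : cos tau < 1) by lra.
  specialize (HB i Hi).
  set (E := nth i (Y tau) 0 + -1 * nth i (schedule tau) 0) in HB.
  replace (sin tau * ((nth i (Y tau) 0 - nth i (a (S j)) 0) * / (1 - cos tau)) +
           -1 * (sin tau * ((nth i (schedule tau) 0 - nth i (a (S j)) 0) * / (1 - cos tau))))
    with (sin tau * / (1 - cos tau) * E) by (unfold E; field; lra).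
  eapply Rle_trans; [apply (rate_ratio_bound _ _ (cos x1)); [lra| apply Rabs_le, SIN_bound]|].
  apply Rmult_le_compat_l; [left; apply Rinv_0_lt_compat; lra| auto].
Qed.

(* Hence, by Gronwall, Y1 follows the schedule on [c, x1] for x1 < 2 pi (j+1). *)
Lemma sol_Y1_phaseB j c x1 : c = 2 * PI * INR j + PI -> (S j < k)%nat ->
  c <= x1 < 2 * PI * INR j + 2 * PI -> x1 <= t1 -> agree_at c ->
  forall i, (i < m)%nat -> nth i (Y x1) 0 = nth i (schedule x1) 0.
Proof. intros Ec Hj Hx1 Hxt Hc i Hi.
  assert (Cx1 : cos x1 < 1) by (apply (cos_lt_1_phaseB j); lra).
  assert (Z := gronwall m (fun i tau => nth i (Y tau) 0 + -1 * nth i (schedule tau) 0)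
    (fun i tau => nth i (gm tau) 0 + -1 * nth i (sched_rate tau) 0) c x1 (/ (1 - cos x1))
    ltac:(left; apply Rinv_0_lt_compat; lra)
    ltac:(intros i' tau Hi' Htau; apply (phaseB_diff_integral j); auto; lra)
    ltac:(intros i' tau B Hi' Htau HB; apply (phaseB_rate_diff_bound j c x1); auto; lra)
    i x1 Hi ltac:(lra)).
  cbv beta in Z. lra.
Qed.

Lemma agree_phaseA j c x : c = 2 * PI * INR j -> (j < k)%nat -> c < x <= c + PI -> x <= t1 ->
  agree_at c -> agree_at x.
Proof. intros Ec Hj Hx Hxt Hc i Hi. pose proof PI_RGT_0. pose proof (pos_INR j).
  apply (agree_by_rates c (c + PI) x i); auto; [nra| |].
  - rewrite Ec. apply closed_form_phaseA; auto.
  - intros tau Htau. assert (Ht' : 2 * PI * INR j <= tau <= 2 * PI * INR j + PI) by lra.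
    assert (Hs := sin_nonneg_phaseA j tau Ht').
    destruct (HG tau ltac:(nra)) as (Lt & G & _). rewrite G. unfold sched_rate.
    destruct (split_idx m i Hi) as [Hi'|(i' & -> & Hi')].
    + rewrite !rhs_lo_zero_phaseA; auto.
    + destruct (rhs_phaseA j tau (Y tau) Hj Hs Lt) as (_ & G2).
      { rewrite Ec in Hc. intros i0 Hi0. apply (sol_Y1_phaseA j tau); auto; lra. }
      destruct (rhs_phaseA j tau (schedule tau) Hj Hs (schedule_len tau (phaseA_in_range j tau Hj Ht')))
        as (_ & G2').
      { intros i0 Hi0. apply (schedule_phaseA j tau i0 ltac:(lia) Ht' Hi0). }
      rewrite G2, G2'; auto.
Qed.

Lemma agree_phaseB j c x : c = 2 * PI * INR j + PI -> (S j < k)%nat -> c < x <= c + PI -> x <= t1 ->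
  agree_at c -> agree_at x.
Proof. intros Ec Hj Hx Hxt Hc i Hi. pose proof PI_RGT_0. pose proof (pos_INR j).
  apply (agree_by_rates c (c + PI) x i); auto; [nra| |].
  - rewrite Ec. replace (2 * PI * INR j + PI + PI) with (2 * PI * INR j + 2 * PI) by ring.
    apply closed_form_phaseB; auto.
  - intros tau Htau. assert (Ht' : 2 * PI * INR j + PI < tau < 2 * PI * INR j + 2 * PI) by lra.
    assert (Hs := sin_neg_phaseB j tau Ht').
    destruct (HG tau ltac:(nra)) as (Lt & G & _). rewrite G. unfold sched_rate.
    destruct (split_idx m i Hi) as [Hi'|(i' & -> & Hi')].
    + destruct (rhs_phaseB j tau (Y tau) Hj Hs Lt) as (_ & G1).
      { rewrite Ec in Hc. intros i0 Hi0. apply (sol_Y2_phaseB j tau); auto; lra. }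
      destruct (rhs_phaseB j tau (schedule tau) Hj Hs (schedule_len tau (phaseB_in_range j tau Hj ltac:(lra))))
        as (_ & G1').
      { intros i0 Hi0. apply (schedule_phaseB j tau i0 ltac:(lia) ltac:(lra) Hi0). }
      rewrite G1, G1', (sol_Y1_phaseB j c tau) by (auto; lra). auto.
    + rewrite !rhs_hi_zero_phaseB; auto.
Qed.

Lemma solution_eq_schedule p : forall x, 0 <= x <= t1 -> x <= INR p * PI -> agree_at x.
Proof.
  pose proof PI_RGT_0.
  induction p; intros x Hx Hxp i Hi.
  - simpl in Hxp. assert (x = 0) by lra. subst x.
    destruct (proj2 (proj2 (HG 0 ltac:(lra))) i Hi) as [pr E].
    rewrite E, RiemannInt_P9, schedule_at_0 by auto. ring.
  - destruct (Rle_dec x (INR p * PI)) as [Hle|Hgt]; [apply IHp; auto|].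
    assert (Hp := half_period_bound p x ltac:(lra) ltac:(lra)).
    assert (IHc : agree_at (INR p * PI)) by (apply IHp; [split; [pose proof (pos_INR p); nra| lra]| lra]).
    destruct (even_odd p) as [j [Ep | Ep]]; subst p.
    + rewrite INR2j in IHc, Hgt. rewrite INR2j1 in Hxp.
      apply (agree_phaseA j (2 * PI * INR j) x); auto; first [lia | lra].
    + rewrite INR2j1 in IHc, Hgt. rewrite INR2j2 in Hxp.
      apply (agree_phaseB j (2 * PI * INR j + PI) x); auto; first [lia | lra].
Qed.
End WithRate.
End Uniqueness.

Lemma flow_fn_at_final_time : flow_fn (v ++ [final_time]) (schedule final_time).
Proof.
  pose proof final_time_ge_PI. pose proof PI_RGT_0.
  unfold flow_fn, PRop. split; [rewrite len_app1; auto|].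
  assert (E1 : firstn m (v ++ [final_time]) = v) by (rewrite <- Hv; apply firstn_app_len).
  assert (E2 : nth m (v ++ [final_time]) 0 = final_time) by (rewrite <- Hv; apply nth_app_len).
  rewrite E1, E2.
  exists schedule_h. split; [split; [apply schedule_h_in_H|]|].
  - intros h' Hh' t y y' E E'. apply schedule_h_Some in E. destruct E as [Ht ->].
    destruct (sol_rate_exists h' Hh' t y' E') as [gm HG].
    assert (Yt : sol_val h' t = y') by (unfold sol_val; rewrite E'; auto).
    rewrite <- Yt. apply nth_ext with 0 0.
    + rewrite schedule_len by auto. symmetry; apply (HG t); lra.
    + intros i Hi. rewrite schedule_len in Hi by auto. symmetry.
      apply (solution_eq_schedule h' t Ht gm HG (2 * k - 1) t); auto; [lra|].
      destruct Ht as [_ Ht]. unfold final_time in Ht. rewrite minus_INR, mult_INR by lia. simpl. nra.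
  - unfold schedule_h. destruct (Rle_dec 0 final_time); [|lra].
    destruct (Rle_dec final_time final_time); [auto|lra].
Qed.

Lemma iterate_fn_on_orbit : iterate_fn (v ++ [INR k]) (a k).
Proof.
  pose proof final_time_ge_PI. pose proof PI_RGT_0.
  exists (schedule final_time). split.
  - exists (v ++ [final_time]). split; [apply time_fn_ok; auto| apply flow_fn_at_final_time].
  - assert (L : length (schedule final_time) = (m + m)%nat) by (apply schedule_len; lra).
    replace (a k) with (map (fun i => nth (m + i) (schedule final_time) 0) (seq 0 m)).
    + apply second_half_ok; auto.
    + apply nth_ext with 0 0; [rewrite length_map, length_seq; symmetry; apply Hal; lia|].
      intros n Hn. rewrite length_map, length_seq in Hn.
      rewrite nth_map_seq_gen by auto. apply schedule_final; auto.
Qed.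
End Orbit.
End Iteration.

Lemma iter_graph_orbit (f : PF) k : forall v w, iter_graph f k v w ->
  exists a : nat -> list R, a 0%nat = v /\ a k = w /\ forall j, (j < k)%nat -> f (a j) (a (S j)).
Proof. induction k; simpl; intros v w H.
  - exists (fun _ => v). subst; repeat split; auto; intros; lia.
  - destruct H as (u & Hu & Hf). destruct (IHk v u Hu) as (a & A0 & Ak & Af).
    exists (fun j => if Nat.eqb j (S k) then w else a j). cbv beta. split; [auto|]. split.
    + rewrite Nat.eqb_refl; auto.
    + intros j Hj. destruct (Nat.eq_dec j k) as [->|Hne].
      * rewrite (proj2 (Nat.eqb_neq k (S k)) ltac:(lia)), Nat.eqb_refl, Ak. auto.
      * rewrite (proj2 (Nat.eqb_neq j (S k)) ltac:(lia)), (proj2 (Nat.eqb_neq (S j) (S k)) ltac:(lia)).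
        apply Af; lia.
Qed.

(* In dimension 0 the only point is [], so a constant function will do. *)
Lemma iterates_dim0 (f : PF) : RRec 0 0 f ->
  exists g : PF, RRec 1 0 g /\
    forall (v : list R) (k : nat) (w : list R),
      length v = 0%nat -> (1 <= k)%nat -> iter_graph f k v w -> g (v ++ [INR k]) w.
Proof.
  intros Hf. exists (juxt 1 0 (fun _ => cst 0)). split; [apply rr_juxt; intros; lia|].
  intros v k w Hv Hk Hit. destruct k; [lia|]. simpl in Hit. destruct Hit as (u & _ & Hu).
  split; [rewrite len_app1, Hv; auto|]. split; [apply (proj1 (RRec_is_fun _ _ _ Hf) _ _ Hu)|]. intros; lia.
Qed.

Theorem lemma4p1 (m : nat) (f : PF) (Hf : RRec m m f) :
  exists g : PF, RRec (S m) m g /\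
    forall (v : list R) (k : nat) (w : list R),
      length v = m -> (1 <= k)%nat -> iter_graph f k v w ->
      g (v ++ [INR k]) w.
Proof.
  destruct (Nat.eq_dec m 0) as [->|Hm0]; [apply iterates_dim0; auto|].
  assert (Hm : (1 <= m)%nat) by lia.
  exists (iterate_fn m f). split; [apply iterate_fn_rr; auto|].
  intros v k w Hv Hk Hit.
  destruct (iter_graph_orbit f k v w Hit) as (a & A0 & Ak & Af).
  assert (Hal : forall j, (j <= k)%nat -> length (a j) = m).
  { intros [|j] Hj; [rewrite A0; auto|]. apply (proj1 (RRec_is_fun _ _ _ Hf) (a j)). apply Af; lia. }
  rewrite <- Ak. apply (iterate_fn_on_orbit m f Hm Hf v k a Hv Hk A0 Af Hal).
Qed.
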